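(* Let $\gamma_a,\gamma_s>0$, $\sigma_B>0$, $q>0$, let $\beta_s$ be the piecewise linear coalbedo described in the context, and fix $\varepsilon_a\in(0,2)$. For $\lambda\ge0$ consider the system \[ \gamma_a T_a'=-\lambda(T_a-T_s)+\varepsilon_a\sigma_B|T_s|^3T_s-2\varepsilon_a\sigma_B|T_a|^3T_a,\qquad \gamma_s T_s'=-\lambda(T_s-T_a)-\sigma_B|T_s|^3T_s+\varepsilon_a\sigma_B|T_a|^3T_a+q\beta_s(T_s). \] Let $\lambda^*\ge0$ and let $(T_a^{eq,\lambda^*},T_s^{eq,\lambda^*})$ be a warm [respectively cold] equilibrium point of the system with $\lambda=\lambda^*$, in the sense that $T_s^{eq,\lambda^*}\notin[T_{s,-},T_{s,+}]$. Then for $\lambda$ close to $\lambda^*$ there exists a unique equilibrium point $(T_a^{eq,\lambda},T_s^{eq,\lambda})$ of the system with parameter $\lambda$ (close to $(T_a^{eq,\lambda^*},T_s^{eq,\lambda^*})$); it is asymptotically exponentially stable; the maps $\lambda\mapsto T_s^{eq,\lambda}$ and $\lambda\mapsto T_a^{eq,\lambda}$ are locally analytic; locally, $\lambda\mapsto T_s^{eq,\lambda}$ is decreasing; and locally $\lambda\mapsto T_a^{eq,\lambda}$ is increasing if $\varepsilon_a\in(0,1)$ and decreasing if $\varepsilon_a\in(1,2)$.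
   Context: The coalbedo is $\beta_s(T)=\beta_{s,-}$ for $T\le T_{s,-}$, $\beta_s(T)=\beta_{s,-}+(\beta_{s,+}-\beta_{s,-})\frac{T-T_{s,-}}{T_{s,+}-T_{s,-}}$ for $T\in[T_{s,-},T_{s,+}]$, and $\beta_s(T)=\beta_{s,+}$ for $T\ge T_{s,+}$, where $T_{s,+}>T_{s,-}>0$ and $\beta_{s,+}>\beta_{s,-}>0$. An equilibrium point is a point with nonnegative components where both right-hand sides vanish; warm means $T_s>T_{s,+}$, cold means $T_s<T_{s,-}$. *)

From Stdlib Require Import Reals Lra.
From Coquelicot Require Import Coquelicot.
Open Scope R_scope.

Definition coalbedo (Tm Tp bm bp T : R) : R :=
  if Rle_dec T Tm then bm
  else if Rle_dec Tp T then bp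
  else bm + (bp - bm) * (T - Tm) / (Tp - Tm).

Definition rhs_a (sigB eps lam : R) (Ta Ts : R) : R :=
  - lam * (Ta - Ts) + eps * sigB * (Rabs Ts) ^ 3 * Ts
  - 2 * eps * sigB * (Rabs Ta) ^ 3 * Ta.

Definition rhs_s (sigB q Tm Tp bm bp eps lam : R) (Ta Ts : R) : R :=
  - lam * (Ts - Ta) - sigB * (Rabs Ts) ^ 3 * Ts
  + eps * sigB * (Rabs Ta) ^ 3 * Ta + q * coalbedo Tm Tp bm bp Ts.

Definition is_equilibrium (sigB q Tm Tp bm bp eps lam Ta Ts : R) : Prop :=
  0 <= Ta /\ 0 <= Ts /\
  rhs_a sigB eps lam Ta Ts = 0 /\
  rhs_s sigB q Tm Tp bm bp eps lam Ta Ts = 0.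

Definition dist2 (a1 s1 a2 s2 : R) : R :=
  sqrt ((a1 - a2) ^ 2 + (s1 - s2) ^ 2).

Definition is_solution (ga gs sigB q Tm Tp bm bp eps lam : R)
    (Tend : R) (xa xs : R -> R) : Prop :=
  filterlim xa (at_right 0) (locally (xa 0)) /\
  filterlim xs (at_right 0) (locally (xs 0)) /\
  forall t, 0 < t < Tend ->
    is_derive xa t (rhs_a sigB eps lam (xa t) (xs t) / ga) /\
    is_derive xs t (rhs_s sigB q Tm Tp bm bp eps lam (xa t) (xs t) / gs).

Definition exp_stable (ga gs sigB q Tm Tp bm bp eps lam Ta Ts : R) : Prop :=
  exists delta C mu, 0 < delta /\ 0 < C /\ 0 < mu /\
    forall (Tend : R) (xa xs : R -> R),
      0 < Tend ->
      is_solution ga gs sigB q Tm Tp bm bp eps lam Tend xa xs ->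
      dist2 (xa 0) (xs 0) Ta Ts < delta ->
      forall t, 0 <= t < Tend ->
        dist2 (xa t) (xs t) Ta Ts <= C * exp (- mu * t) * dist2 (xa 0) (xs 0) Ta Ts.

Definition analytic_on (D : R -> Prop) (f : R -> R) : Prop :=
  forall x0, D x0 -> exists (a : nat -> R) (r : R), 0 < r /\
    forall x, D x -> Rabs (x - x0) < r -> is_pseries a (x - x0) (f x).

Definition strictly_decreasing_on (D : R -> Prop) (f : R -> R) : Prop :=
  forall x y, D x -> D y -> x < y -> f y < f x.

Definition strictly_increasing_on (D : R -> Prop) (f : R -> R) : Prop :=
  forall x y, D x -> D y -> x < y -> f x < f y.

(* Near a warm or cold equilibrium the coalbedo is a constant [beta], so for
   nonnegative temperatures the equilibria are the positive solutions of a
   polynomial system [Fa = Fs = 0] with [Q = q beta].  Adding the two equations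
   eliminates [lambda]: with [t = Ta / Ts] one gets [sigma Ts^4 (1 - eps + eps t^4) = Q],
   and the first equation then reads [lambda^4 = eps^4 sigma Q^3 phi t] with [phi]
   strictly increasing on the admissible range of [t].  Hence each [lambda] has
   at most one positive equilibrium, [t] increases with [lambda], [Ts] decreases,
   and [Ta] moves with the sign of [1 - eps].

   At a positive equilibrium the Jacobian has positive determinant, so the
   Taylor expansion can be solved by power series in [lambda - lambda*]: the
   coefficients obey a recursion whose solutions are dominated by [A r^n / n^2],
   a weight that the Cauchy product preserves up to a constant.  By uniqueness
   this analytic branch is the branch of equilibria.  Finally the Jacobian is
   cooperative with negative diagonal, so the quadratic form with weights
   [(dFs/dTa, dFa/dTs)] is a strict Lyapunov function, which gives exponential
   stability. *)

From Stdlib Require Import Reals Lra Lia.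
From Coquelicot Require Import Coquelicot.
Open Scope R_scope.

(** * Majorants for Cauchy products *)

(* [inv_sq 0 = 0] because [/ 0 = 0]; this makes the endpoints of convolutions vanish. *)
Definition inv_sq (n : nat) : R := / INR n ^ 2.

Lemma inv_sq_0 : inv_sq 0 = 0.
Proof. unfold inv_sq; simpl; rewrite Rmult_0_l, Rinv_0; reflexivity. Qed.

Lemma inv_sq_1 : inv_sq 1 = 1.
Proof. unfold inv_sq; simpl; rewrite !Rmult_1_r; apply Rinv_1. Qed.

Lemma inv_sq_ge0 n : 0 <= inv_sq n.
Proof.
  destruct n; [rewrite inv_sq_0; lra|].
  unfold inv_sq; apply Rlt_le, Rinv_0_lt_compat, pow_lt, lt_0_INR; lia.
Qed.

Lemma inv_sq_le_1 n : inv_sq n <= 1.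
Proof.
  destruct n as [|n]; [rewrite inv_sq_0; lra|].
  unfold inv_sq; rewrite <- Rinv_1; apply Rinv_le_contravar; [lra|].
  assert (1 <= INR (S n)) by (apply (le_INR 1); lia); nra.
Qed.

Lemma sum_inv_sq_le n : sum_f_R0 inv_sq n <= 2.
Proof.
  assert (telescope : forall N, sum_f_R0 inv_sq (S N) <= 2 - / INR (S N)).
  { induction N as [|N IH].
    - simpl; rewrite inv_sq_0; unfold inv_sq; simpl; rewrite !Rmult_1_r, Rinv_1; lra.
    - rewrite tech5; unfold inv_sq at 2.
      set (k := INR (S N)) in *.
      assert (hk : 1 <= k) by (apply (le_INR 1); lia).
      replace (INR (S (S N))) with (k + 1) by (unfold k; rewrite (S_INR (S N)); ring).
      assert (/ (k + 1) ^ 2 <= / k - / (k + 1)).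
      { replace (/ k - / (k + 1)) with (/ (k * (k + 1))) by (field; lra).
        apply Rinv_le_contravar; nra. }
      lra. }
  destruct n as [|n]; [simpl; rewrite inv_sq_0; lra|].
  pose proof (telescope n).
  assert (0 < / INR (S n)) by (apply Rinv_0_lt_compat, lt_0_INR; lia).
  lra.
Qed.

Lemma sum_f_R0_rev f n : sum_f_R0 (fun k => f (n - k)%nat) n = sum_f_R0 f n.
Proof.
  induction n as [|n IH]; [reflexivity|].
  rewrite decomp_sum by lia; simpl Init.Nat.pred.
  rewrite (sum_eq _ (fun k => f (n - k)%nat)) by (intros; f_equal; lia).
  rewrite IH, tech5; simpl; ring.
Qed.

Lemma inv_sq_mul_le n k : (k <= n)%nat ->
  inv_sq k * inv_sq (n - k) <= 2 * inv_sq n * (inv_sq k + inv_sq (n - k)).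
Proof.
  intros hk.
  destruct (Nat.eq_dec k 0) as [->|hk0].
  { rewrite inv_sq_0, Rmult_0_l, Rplus_0_l.
    apply Rmult_le_pos; [pose proof (inv_sq_ge0 n); lra | apply inv_sq_ge0]. }
  destruct (Nat.eq_dec k n) as [->|hkn].
  { rewrite Nat.sub_diag, inv_sq_0, Rmult_0_r, Rplus_0_r.
    apply Rmult_le_pos; [pose proof (inv_sq_ge0 n); lra | apply inv_sq_ge0]. }
  unfold inv_sq.
  replace (INR n) with (INR k + INR (n - k)) by (rewrite <- plus_INR; f_equal; lia).
  assert (0 < INR k) by (apply lt_0_INR; lia).
  assert (0 < INR (n - k)) by (apply lt_0_INR; lia).
  set (x := INR k) in *; set (y := INR (n - k)) in *.
  assert (0 <= (x - y) ^ 2 / (x ^ 2 * y ^ 2 * (x + y) ^ 2)).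
  { apply Rdiv_le_0_compat; [apply pow2_ge_0|].
    repeat apply Rmult_lt_0_compat; try apply pow_lt; lra. }
  replace (/ x ^ 2 * / y ^ 2) with
    (2 * / (x + y) ^ 2 * (/ x ^ 2 + / y ^ 2) - (x - y) ^ 2 / (x ^ 2 * y ^ 2 * (x + y) ^ 2))
    by (field; lra).
  lra.
Qed.

Definition majorant (A r : R) (n : nat) : R := A * r ^ n * inv_sq n.

Lemma majorant_0 A r : majorant A r 0 = 0.
Proof. unfold majorant; rewrite inv_sq_0; ring. Qed.

Lemma majorant_ge0 A r n : 0 <= A -> 0 <= r -> 0 <= majorant A r n.
Proof.
  intros; unfold majorant.
  apply Rmult_le_pos; [apply Rmult_le_pos; [lra | apply pow_le; lra] | apply inv_sq_ge0].
Qed.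

Lemma majorant_le_geom A r n : 0 <= A -> 0 <= r -> majorant A r n <= A * r ^ n.
Proof.
  intros hA hR; unfold majorant.
  assert (0 <= A * r ^ n) by (apply Rmult_le_pos; [lra | apply pow_le; lra]).
  pose proof (inv_sq_le_1 n); pose proof (inv_sq_ge0 n); nra.
Qed.

Lemma majorant_S_le A r n : 0 <= A -> 0 < r -> (1 <= n)%nat ->
  majorant A r n <= 4 / r * majorant A r (S n).
Proof.
  intros hA hr hn; unfold majorant, inv_sq.
  assert (hk : 1 <= INR n) by (apply (le_INR 1); lia).
  rewrite S_INR.
  replace (4 / r * (A * r ^ S n * / (INR n + 1) ^ 2))
    with (A * r ^ n * / ((INR n + 1) ^ 2 / 4))
    by (change (r ^ S n) with (r * r ^ n); field; lra).
  apply Rmult_le_compat_l; [apply Rmult_le_pos; [lra | apply pow_le; lra]|].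
  apply Rinv_le_contravar; nra.
Qed.

Lemma majorant_at_0_eq p a r : Rabs (p 0%nat) <= majorant a r 0 -> p 0%nat = 0.
Proof. rewrite majorant_0; intros h; pose proof (Rabs_pos (p 0%nat)); apply Rabs_eq_0; lra. Qed.

Lemma PS_mult_term_majorant p q a b r n k : 0 <= a -> 0 <= b -> 0 < r -> (k <= n)%nat ->
  p 0%nat = 0 -> q 0%nat = 0 ->
  (forall m, (m < n)%nat -> Rabs (p m) <= majorant a r m) ->
  (forall m, (m < n)%nat -> Rabs (q m) <= majorant b r m) ->
  Rabs (p k * q (n - k)%nat) <= (inv_sq k + inv_sq (n - k)) * (2 * a * b * r ^ n * inv_sq n).
Proof.
  intros ha hb hr hk p0 q0 hp hq.
  pose proof (pow_le r n ltac:(lra)); pose proof (inv_sq_ge0 n).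
  pose proof (inv_sq_ge0 k); pose proof (inv_sq_ge0 (n - k)).
  assert (0 <= (inv_sq k + inv_sq (n - k)) * (2 * a * b * r ^ n * inv_sq n))
    by (apply Rmult_le_pos; [lra | repeat apply Rmult_le_pos; lra]).
  destruct (Nat.eq_dec k 0) as [->|hk0]; [rewrite p0, Rmult_0_l, Rabs_R0; lra|].
  destruct (Nat.eq_dec k n) as [->|hkn];
    [rewrite Nat.sub_diag in *; rewrite q0, Rmult_0_r, Rabs_R0; lra|].
  rewrite Rabs_mult; eapply Rle_trans.
  { apply Rmult_le_compat; try apply Rabs_pos; [apply hp | apply hq]; lia. }
  unfold majorant.
  replace (a * r ^ k * inv_sq k * (b * r ^ (n - k) * inv_sq (n - k)))
    with (a * b * r ^ n * (inv_sq k * inv_sq (n - k)))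
    by (rewrite <- (Nat.sub_add k n), pow_add, Nat.add_sub by lia; ring).
  replace ((inv_sq k + inv_sq (n - k)) * (2 * a * b * r ^ n * inv_sq n))
    with (a * b * r ^ n * (2 * inv_sq n * (inv_sq k + inv_sq (n - k)))) by ring.
  apply Rmult_le_compat_l; [apply Rmult_le_pos; [apply Rmult_le_pos|]; lra|].
  apply inv_sq_mul_le; lia.
Qed.

Lemma PS_mult_majorant p q a b r n : 0 <= a -> 0 <= b -> 0 < r -> (1 <= n)%nat ->
  (forall m, (m < n)%nat -> Rabs (p m) <= majorant a r m) ->
  (forall m, (m < n)%nat -> Rabs (q m) <= majorant b r m) ->
  Rabs (PS_mult p q n) <= majorant (8 * a * b) r n.
Proof.
  intros ha hb hr hn hp hq.
  assert (p0 : p 0%nat = 0) by (apply (majorant_at_0_eq p a r), hp; lia).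
  assert (q0 : q 0%nat = 0) by (apply (majorant_at_0_eq q b r), hq; lia).
  set (c := 2 * a * b * r ^ n * inv_sq n).
  assert (hc : 0 <= c).
  { unfold c; pose proof (inv_sq_ge0 n); pose proof (pow_le r n ltac:(lra)).
    repeat apply Rmult_le_pos; lra. }
  unfold PS_mult; eapply Rle_trans; [apply sum_f_R0_triangle|].
  eapply Rle_trans;
    [apply (sum_Rle _ (fun k => (inv_sq k + inv_sq (n - k)) * c)); intros k hk;
     apply PS_mult_term_majorant; auto|].
  rewrite <- scal_sum, plus_sum, (sum_f_R0_rev inv_sq n).
  pose proof (sum_inv_sq_le n).
  replace (majorant (8 * a * b) r n) with (c * 4) by (unfold c, majorant; ring).
  apply Rmult_le_compat_l; lra.
Qed.

(* [PS_powS a k] is the Cauchy power [a ^ (k + 1)]. *)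
Fixpoint PS_powS (a : nat -> R) (k : nat) : nat -> R :=
  match k with O => a | S k => PS_mult a (PS_powS a k) end.

Lemma PS_mult_0_l a b : a 0%nat = 0 -> PS_mult a b 0 = 0.
Proof. intros h; unfold PS_mult; simpl; rewrite h; ring. Qed.

Lemma PS_powS_0 a k : a 0%nat = 0 -> PS_powS a k 0 = 0.
Proof. destruct k; [auto | apply PS_mult_0_l]. Qed.

Lemma PS_mult_ext_lt a b a' b' n :
  a 0%nat = 0 -> a' 0%nat = 0 -> b 0%nat = 0 -> b' 0%nat = 0 ->
  (forall i, (i < n)%nat -> a i = a' i) -> (forall i, (i < n)%nat -> b i = b' i) ->
  PS_mult a b n = PS_mult a' b' n.
Proof.
  intros ha ha' hb hb' eqa eqb; unfold PS_mult; apply sum_eq; intros k hk.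
  destruct (Nat.eq_dec k 0) as [->|hk0]; [rewrite ha, ha'; ring|].
  destruct (Nat.eq_dec k n) as [->|hkn]; [rewrite Nat.sub_diag, hb, hb'; ring|].
  rewrite eqa, eqb by lia; reflexivity.
Qed.

Lemma PS_powS_S_ext_lt a a' k n : a 0%nat = 0 -> a' 0%nat = 0 ->
  (forall i, (i < n)%nat -> a i = a' i) -> PS_powS a (S k) n = PS_powS a' (S k) n.
Proof.
  intros h0 h0'; revert n; induction k as [|k IH]; intros n eqa.
  - apply PS_mult_ext_lt; auto.
  - apply PS_mult_ext_lt; auto; try exact (PS_powS_0 _ (S k) h0);
      try exact (PS_powS_0 _ (S k) h0').
    intros i hi; apply IH; intros j hj; apply eqa; lia.
Qed.

Lemma PS_powS_majorant a A r n : 0 <= A -> 0 < r ->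
  (forall m, (m < n)%nat -> Rabs (a m) <= majorant A r m) ->
  forall k m, (1 <= m <= n)%nat -> Rabs (PS_powS a (S k) m) <= majorant ((8 * A) ^ S k * A) r m.
Proof.
  intros hA hr ha; induction k as [|k IH]; intros m hm.
  - simpl PS_powS; replace ((8 * A) ^ 1 * A) with (8 * A * A) by ring.
    apply PS_mult_majorant; auto; try lia; intros j hj; apply ha; lia.
  - change (PS_powS a (S (S k)) m) with (PS_mult a (PS_powS a (S k)) m).
    replace ((8 * A) ^ S (S k) * A) with (8 * A * ((8 * A) ^ S k * A)) by (simpl; ring).
    apply PS_mult_majorant; auto; try lia.
    + pose proof (pow_le (8 * A) (S k) ltac:(lra)); apply Rmult_le_pos; lra.
    + intros j hj; apply ha; lia.
    + intros j hj; destruct j as [|j].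
      * rewrite PS_powS_0, Rabs_R0 by (apply (majorant_at_0_eq a A r), ha; lia).
        rewrite majorant_0; lra.
      * apply IH; lia.
Qed.

(** * Analytic solutions of quartic systems *)

(* The polynomials in [(u, x, y)] met in the Taylor expansion of the equilibrium
   equations: no constant term, no linear term in [x, y], and a nonlinear part
   that is a sum of a quartic in [x] and a quartic in [y]. *)
Record quartic_row := QuarticRow {
  row_u : R; row_ux : R; row_uy : R;
  row_x2 : R; row_x3 : R; row_x4 : R;
  row_y2 : R; row_y3 : R; row_y4 : R }.

Definition row_eval (c : quartic_row) (u x y : R) : R :=
  row_u c * u + u * (row_ux c * x + row_uy c * y)
  + (row_x2 c * x ^ 2 + row_x3 c * x ^ 3 + row_x4 c * x ^ 4)
  + (row_y2 c * y ^ 2 + row_y3 c * y ^ 3 + row_y4 c * y ^ 4).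

Definition row_coef_lin (c : quartic_row) (X Y : nat -> R) (n : nat) : R :=
  (if Nat.eqb n 1 then row_u c else 0)
  + match n with O => 0 | S m => row_ux c * X m + row_uy c * Y m end.

(* The coefficient of [u ^ n] in [row_eval c u (X u) (Y u)]. *)
Definition row_coef (c : quartic_row) (X Y : nat -> R) (n : nat) : R :=
  row_coef_lin c X Y n
  + (row_x2 c * PS_powS X 1 n + row_x3 c * PS_powS X 2 n + row_x4 c * PS_powS X 3 n)
  + (row_y2 c * PS_powS Y 1 n + row_y3 c * PS_powS Y 2 n + row_y4 c * PS_powS Y 3 n).

Definition row_norm (c : quartic_row) : R :=
  Rabs (row_u c) + Rabs (row_ux c) + Rabs (row_uy c)
  + Rabs (row_x2 c) + Rabs (row_x3 c) + Rabs (row_x4 c)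
  + Rabs (row_y2 c) + Rabs (row_y3 c) + Rabs (row_y4 c).

Definition row_lincomb (al be : R) (c1 c2 : quartic_row) : quartic_row :=
  QuarticRow (al * row_u c1 + be * row_u c2)
    (al * row_ux c1 + be * row_ux c2) (al * row_uy c1 + be * row_uy c2)
    (al * row_x2 c1 + be * row_x2 c2) (al * row_x3 c1 + be * row_x3 c2)
    (al * row_x4 c1 + be * row_x4 c2) (al * row_y2 c1 + be * row_y2 c2)
    (al * row_y3 c1 + be * row_y3 c2) (al * row_y4 c1 + be * row_y4 c2).

Lemma row_eval_lincomb al be c1 c2 u x y :
  row_eval (row_lincomb al be c1 c2) u x y = al * row_eval c1 u x y + be * row_eval c2 u x y.
Proof. unfold row_eval; simpl; ring. Qed.

Lemma row_norm_ge0 c : 0 <= row_norm c.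
Proof.
  unfold row_norm; repeat apply Rplus_le_le_0_compat; apply Rabs_pos.
Qed.

Lemma row_norm_parts c :
  Rabs (row_u c) <= row_norm c /\ Rabs (row_ux c) + Rabs (row_uy c) <= row_norm c /\
  Rabs (row_x2 c) + Rabs (row_x3 c) + Rabs (row_x4 c)
    + (Rabs (row_y2 c) + Rabs (row_y3 c) + Rabs (row_y4 c)) <= row_norm c.
Proof.
  unfold row_norm.
  pose proof (Rabs_pos (row_u c)); pose proof (Rabs_pos (row_ux c));
  pose proof (Rabs_pos (row_uy c)); pose proof (Rabs_pos (row_x2 c));
  pose proof (Rabs_pos (row_x3 c)); pose proof (Rabs_pos (row_x4 c));
  pose proof (Rabs_pos (row_y2 c)); pose proof (Rabs_pos (row_y3 c));
  pose proof (Rabs_pos (row_y4 c)); repeat split; lra.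
Qed.

Lemma row_coef_0 c X Y : X 0%nat = 0 -> Y 0%nat = 0 -> row_coef c X Y 0 = 0.
Proof.
  intros hX hY; unfold row_coef, row_coef_lin; simpl Nat.eqb.
  rewrite !PS_powS_0 by auto; ring.
Qed.

Lemma row_coef_ext_lt c X Y X' Y' n :
  X 0%nat = 0 -> X' 0%nat = 0 -> Y 0%nat = 0 -> Y' 0%nat = 0 ->
  (forall i, (i < n)%nat -> X i = X' i) -> (forall i, (i < n)%nat -> Y i = Y' i) ->
  row_coef c X Y n = row_coef c X' Y' n.
Proof.
  intros hX hX' hY hY' eqX eqY; unfold row_coef, row_coef_lin.
  rewrite !(PS_powS_S_ext_lt X X' _ n), !(PS_powS_S_ext_lt Y Y' _ n) by auto.
  destruct n as [|m]; [reflexivity|].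
  rewrite (eqX m), (eqY m) by lia; reflexivity.
Qed.

Section FormalSolution.

Variables c1 c2 : quartic_row.

(* [row_coef] at index [n] only reads indices [< n]; [coef_table n] holds the
   coefficient pairs of the formal solution up to index [n]. *)
Fixpoint coef_table (n : nat) : nat -> R * R :=
  match n with
  | O => fun _ => (0, 0)
  | S m => fun i =>
      if Nat.leb i m then coef_table m i
      else (row_coef c1 (fun j => fst (coef_table m j)) (fun j => snd (coef_table m j)) (S m),
            row_coef c2 (fun j => fst (coef_table m j)) (fun j => snd (coef_table m j)) (S m))
  end.

Definition formal_x (n : nat) : R := fst (coef_table n n).
Definition formal_y (n : nat) : R := snd (coef_table n n).

Lemma coef_table_stable n i : (i <= n)%nat -> coef_table n i = coef_table i i.
Proof.
  induction n as [|m IH]; intros hi.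
  - replace i with 0%nat by lia; reflexivity.
  - destruct (Nat.leb i m) eqn:E.
    + apply Nat.leb_le in E; rewrite <- IH by exact E; simpl; rewrite (proj2 (Nat.leb_le i m) E).
      reflexivity.
    + apply Nat.leb_gt in E; replace i with (S m) by lia; reflexivity.
Qed.

Lemma formal_solution_rec n :
  formal_x n = row_coef c1 formal_x formal_y n /\ formal_y n = row_coef c2 formal_x formal_y n.
Proof.
  destruct n as [|m]; [rewrite !row_coef_0 by reflexivity; split; reflexivity|].
  assert (top : coef_table (S m) (S m) =
    (row_coef c1 (fun j => fst (coef_table m j)) (fun j => snd (coef_table m j)) (S m),
     row_coef c2 (fun j => fst (coef_table m j)) (fun j => snd (coef_table m j)) (S m))).
  { cbn -[Nat.leb row_coef]; rewrite (proj2 (Nat.leb_gt (S m) m) ltac:(lia)); reflexivity. }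
  assert (below : forall j, (j < S m)%nat -> coef_table m j = coef_table j j)
    by (intros; apply coef_table_stable; lia).
  assert (at0 : coef_table m 0 = (0, 0)) by (rewrite below by lia; reflexivity).
  split; [unfold formal_x at 1 | unfold formal_y at 1]; rewrite top; simpl fst; simpl snd;
    apply row_coef_ext_lt; try (rewrite at0; reflexivity); try reflexivity;
    intros j hj; unfold formal_x, formal_y; rewrite below; auto.
Qed.

End FormalSolution.

Lemma Rabs_lincomb2_le a1 a2 w1 w2 B :
  Rabs w1 <= B -> Rabs w2 <= B -> Rabs (a1 * w1 + a2 * w2) <= (Rabs a1 + Rabs a2) * B.
Proof.
  intros h1 h2; eapply Rle_trans; [apply Rabs_triang|]; rewrite !Rabs_mult.
  pose proof (Rabs_pos a1); pose proof (Rabs_pos a2); nra.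
Qed.

Lemma Rabs_lincomb3_le a1 a2 a3 w1 w2 w3 B :
  Rabs w1 <= B -> Rabs w2 <= B -> Rabs w3 <= B ->
  Rabs (a1 * w1 + a2 * w2 + a3 * w3) <= (Rabs a1 + Rabs a2 + Rabs a3) * B.
Proof.
  intros h1 h2 h3; eapply Rle_trans; [apply Rabs_triang|].
  pose proof (Rabs_lincomb2_le a1 a2 w1 w2 B h1 h2).
  rewrite Rabs_mult; pose proof (Rabs_pos a3); nra.
Qed.

(* With [A = 1 / (64 M)] and [r = 512 M ^ 2] the recursion [row_coef] preserves
   the bound [|X n| <= A r ^ n / n ^ 2]: the linear part contributes at most an
   eighth of it, and so does the nonlinear part, thanks to the factor [8 A]. *)
Definition row_majorant (M : R) : nat -> R := majorant (/ (64 * M)) (512 * M ^ 2).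

Section RowMajorant.

Variable M : R.
Hypothesis hM : 1 <= M.

Let A := / (64 * M).
Let r := 512 * M ^ 2.

Let hA : 0 < A.
Proof. unfold A; apply Rinv_0_lt_compat; lra. Qed.

Let h8A : 8 * A <= / 8.
Proof.
  unfold A; replace (8 * / (64 * M)) with (/ (8 * M)) by (field; lra).
  apply Rinv_le_contravar; lra.
Qed.

Let hr : 0 < r.
Proof. unfold r; nra. Qed.

Let hAr : A * r = 8 * M.
Proof. unfold A, r; field; lra. Qed.

Lemma PS_powS_row_majorant X n k : (1 <= n)%nat ->
  (forall m, (m < n)%nat -> Rabs (X m) <= row_majorant M m) ->
  Rabs (PS_powS X (S k) n) <= 8 * A * row_majorant M n.
Proof.
  intros hn hX; eapply Rle_trans; [apply (PS_powS_majorant X A r n); auto; lra|].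
  unfold row_majorant; fold A r.
  replace (majorant ((8 * A) ^ S k * A) r n) with ((8 * A) ^ S k * majorant A r n)
    by (unfold majorant; ring).
  apply Rmult_le_compat_r; [apply majorant_ge0; lra|].
  simpl; pose proof (pow_incr (8 * A) 1 k ltac:(lra)); rewrite pow1 in *; nra.
Qed.

Lemma row_coef_lin_majorant c X Y n : row_norm c <= M -> (1 <= n)%nat ->
  (forall m, (m < n)%nat -> Rabs (X m) <= row_majorant M m) ->
  (forall m, (m < n)%nat -> Rabs (Y m) <= row_majorant M m) ->
  Rabs (row_coef_lin c X Y n) <= row_majorant M n / 8.
Proof.
  intros hc hn hX hY; destruct (row_norm_parts c) as [hu [huxy _]].
  unfold row_coef_lin; destruct n as [|[|m]]; [lia| |].
  - assert (X0 : X 0%nat = 0) by (apply (majorant_at_0_eq X A r), hX; lia).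
    assert (Y0 : Y 0%nat = 0) by (apply (majorant_at_0_eq Y A r), hY; lia).
    simpl; rewrite X0, Y0, !Rmult_0_r, !Rplus_0_r.
    replace (row_majorant M 1) with (8 * M)
      by (unfold row_majorant, majorant; fold A r; rewrite inv_sq_1, pow_1, Rmult_1_r;
          symmetry; exact hAr).
    lra.
  - rewrite Rplus_0_l.
    assert (hS : row_majorant M (S m) <= 4 / r * row_majorant M (S (S m)))
      by (apply (majorant_S_le A r (S m)); [lra | exact hr | lia]).
    assert (hMr : M * (4 / r) <= / 8).
    { unfold r; replace (M * (4 / (512 * M ^ 2))) with (/ (128 * M)) by (field; lra).
      apply Rinv_le_contravar; lra. }
    assert (hpos : forall k, 0 <= row_majorant M k)
      by (intros; unfold row_majorant; fold A r; apply majorant_ge0; lra).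
    pose proof (hpos (S m)); pose proof (hpos (S (S m))).
    assert (0 <= Rabs (row_ux c) + Rabs (row_uy c)) by (pose proof (Rabs_pos (row_ux c));
      pose proof (Rabs_pos (row_uy c)); lra).
    eapply Rle_trans; [apply Rabs_lincomb2_le; [apply hX | apply hY]; lia|].
    apply Rle_trans with (M * (4 / r * row_majorant M (S (S m)))); [apply Rmult_le_compat; lra|].
    replace (M * (4 / r * row_majorant M (S (S m)))) with (M * (4 / r) * row_majorant M (S (S m)))
      by ring.
    apply Rle_trans with (/ 8 * row_majorant M (S (S m))); [apply Rmult_le_compat_r|]; lra.
Qed.

Lemma row_coef_majorant c X Y n : row_norm c <= M -> (1 <= n)%nat ->
  (forall m, (m < n)%nat -> Rabs (X m) <= row_majorant M m) ->
  (forall m, (m < n)%nat -> Rabs (Y m) <= row_majorant M m) ->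
  Rabs (row_coef c X Y n) <= row_majorant M n.
Proof.
  intros hc hn hX hY; destruct (row_norm_parts c) as [_ [_ hnl]].
  set (E := row_majorant M n).
  assert (hE : 0 <= E) by (unfold E, row_majorant; fold A r; apply majorant_ge0; lra).
  assert (nonlinear : forall Z, (forall m, (m < n)%nat -> Rabs (Z m) <= row_majorant M m) ->
    forall a2 a3 a4, Rabs (a2 * PS_powS Z 1 n + a3 * PS_powS Z 2 n + a4 * PS_powS Z 3 n)
                     <= (Rabs a2 + Rabs a3 + Rabs a4) * (8 * A * E)).
  { intros Z hZ a2 a3 a4; apply Rabs_lincomb3_le; apply PS_powS_row_majorant; auto. }
  pose proof (nonlinear X hX (row_x2 c) (row_x3 c) (row_x4 c)).
  pose proof (nonlinear Y hY (row_y2 c) (row_y3 c) (row_y4 c)).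
  assert (hlin := row_coef_lin_majorant c X Y n hc hn hX hY); fold E in hlin.
  assert ((Rabs (row_x2 c) + Rabs (row_x3 c) + Rabs (row_x4 c)
          + (Rabs (row_y2 c) + Rabs (row_y3 c) + Rabs (row_y4 c))) * (8 * A * E) <= E / 8).
  { apply Rle_trans with (M * (8 * A * E)); [apply Rmult_le_compat_r; [nra | lra]|].
    replace (M * (8 * A * E)) with (8 * A * M * E) by ring.
    replace (8 * A * M) with (/ 8) by (unfold A; field; lra); lra. }
  unfold row_coef; eapply Rle_trans; [apply Rabs_triang|].
  eapply Rle_trans; [apply Rplus_le_compat_r, Rabs_triang|].
  lra.
Qed.

Lemma formal_solution_majorant c1 c2 : row_norm c1 <= M -> row_norm c2 <= M ->
  forall n, Rabs (formal_x c1 c2 n) <= row_majorant M n /\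
            Rabs (formal_y c1 c2 n) <= row_majorant M n.
Proof.
  intros h1 h2.
  enough (H : forall N n, (n < N)%nat -> Rabs (formal_x c1 c2 n) <= row_majorant M n /\
                                         Rabs (formal_y c1 c2 n) <= row_majorant M n)
    by (intros n; apply (H (S n)); lia).
  induction N as [|N IH]; intros n hn; [lia|].
  destruct n as [|n].
  - unfold row_majorant; rewrite majorant_0; unfold formal_x, formal_y; simpl; rewrite Rabs_R0; lra.
  - destruct (formal_solution_rec c1 c2 (S n)) as [-> ->].
    split; apply row_coef_majorant; auto; try lia; intros m hm; apply IH; lia.
Qed.

Lemma PS_powS_geom_bound X : (forall n, Rabs (X n) <= row_majorant M n) ->
  forall k n, Rabs (PS_powS X k n) <= A * r ^ n.
Proof.
  intros hX k n.
  assert (hmaj : row_majorant M n <= A * r ^ n) by (apply majorant_le_geom; lra).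
  destruct k as [|k]; [apply (Rle_trans _ _ _ (hX n) hmaj)|].
  destruct n as [|n].
  - rewrite PS_powS_0, Rabs_R0 by (apply (majorant_at_0_eq X A r), hX); simpl; lra.
  - eapply Rle_trans; [apply PS_powS_row_majorant; auto; lia|].
    assert (0 <= row_majorant M (S n)) by (unfold row_majorant; fold A r; apply majorant_ge0; lra).
    nra.
Qed.

End RowMajorant.

Lemma CV_radius_ge_of_geom_bound a K r : 0 < r -> (forall n, Rabs (a n) <= K * r ^ n) ->
  Rbar_le (/ r) (CV_radius a).
Proof.
  intros hr hb; apply (proj1 (CV_radius_bounded a)).
  exists K; intros n.
  rewrite Rabs_mult, <- RPow_abs, (Rabs_pos_eq (/ r)) by (apply Rlt_le, Rinv_0_lt_compat; lra).
  eapply Rle_trans;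
    [apply Rmult_le_compat_r; [apply pow_le, Rlt_le, Rinv_0_lt_compat; lra | apply hb]|].
  rewrite Rmult_assoc, <- Rpow_mult_distr, Rinv_r, pow1 by lra; lra.
Qed.

Lemma is_pseries_delta u : is_pseries (fun n => 0 ^ n) u 1.
Proof.
  assert (h := is_series_geom 0 ltac:(rewrite Rabs_R0; lra)).
  replace (/ (1 - 0)) with 1 in h by field.
  apply is_pseries_R; eapply is_series_ext; [|exact h].
  intros [|n]; simpl; ring.
Qed.

Lemma is_pseries_PS_powS X u x : is_pseries X u x ->
  (forall k, Rbar_lt (Rabs u) (CV_radius (PS_powS X k))) ->
  forall k, is_pseries (PS_powS X k) u (x ^ S k).
Proof.
  intros hX hcv; induction k as [|k IH]; [rewrite pow_1; exact hX|].
  exact (is_pseries_mult X (PS_powS X k) u x (x ^ S k) hX IH (hcv 0%nat) (hcv k)).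
Qed.

Lemma is_pseries_row_coef c X Y u x y :
  (forall k, is_pseries (PS_powS X k) u (x ^ S k)) ->
  (forall k, is_pseries (PS_powS Y k) u (y ^ S k)) ->
  is_pseries (row_coef c X Y) u (row_eval c u x y).
Proof.
  intros hX hY.
  assert (mc : forall a : R, mult u a = mult a u) by (intros; apply Rmult_comm).
  assert (scal3 : forall Z z a2 a3 a4, (forall k, is_pseries (PS_powS Z k) u (z ^ S k)) ->
    is_pseries (fun n => a2 * PS_powS Z 1 n + a3 * PS_powS Z 2 n + a4 * PS_powS Z 3 n) u
      (a2 * z ^ 2 + a3 * z ^ 3 + a4 * z ^ 4)).
  { intros Z z a2 a3 a4 hZ.
    exact (is_pseries_plus _ _ _ _ _ (is_pseries_plus _ _ _ _ _
      (is_pseries_scal a2 _ _ _ (mc _) (hZ 1%nat)) (is_pseries_scal a3 _ _ _ (mc _) (hZ 2%nat)))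
      (is_pseries_scal a4 _ _ _ (mc _) (hZ 3%nat))). }
  assert (lin := is_pseries_incr_1 _ _ _ (is_pseries_plus _ _ _ _ _
    (is_pseries_scal (row_u c) _ _ _ (mc _) (is_pseries_delta u))
    (is_pseries_plus _ _ _ _ _ (is_pseries_scal (row_ux c) _ _ _ (mc _) (hX 0%nat))
       (is_pseries_scal (row_uy c) _ _ _ (mc _) (hY 0%nat))))).
  assert (total := is_pseries_plus _ _ _ _ _ (is_pseries_plus _ _ _ _ _ lin
    (scal3 X x (row_x2 c) (row_x3 c) (row_x4 c) hX))
    (scal3 Y y (row_y2 c) (row_y3 c) (row_y4 c) hY)).
  replace (row_eval c u x y) with
    (plus (plus (scal u (plus (scal (row_u c) 1)
                              (plus (scal (row_ux c) (x ^ 1)) (scal (row_uy c) (y ^ 1)))))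
      (row_x2 c * x ^ 2 + row_x3 c * x ^ 3 + row_x4 c * x ^ 4))
      (row_y2 c * y ^ 2 + row_y3 c * y ^ 3 + row_y4 c * y ^ 4))
    by (unfold row_eval, plus, scal; simpl; unfold mult; simpl; ring).
  eapply is_pseries_ext; [|exact total].
  intros [|[|k]]; unfold row_coef, row_coef_lin, PS_plus, PS_scal, PS_incr_1; simpl;
    unfold plus, scal, zero; simpl; unfold mult; simpl; ring.
Qed.

Lemma PSeries_small_near_0 a eps : a 0%nat = 0 -> Rbar_lt 0 (CV_radius a) -> 0 < eps ->
  exists d, 0 < d /\ forall u, Rabs u < d -> Rabs (PSeries a u) < eps.
Proof.
  intros ha0 hcv heps.
  assert (hc : continuity_pt (PSeries a) 0)
    by (apply PSeries_continuity; rewrite Rabs_R0; exact hcv).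
  destruct (proj1 (continuity_pt_locally _ _) hc (mkposreal eps heps)) as [d hd].
  exists d; split; [apply cond_pos|]; intros u hu.
  specialize (hd u); rewrite PSeries_0, ha0, Rminus_0_r in hd; apply hd.
  change (Rabs (u - 0) < d); rewrite Rminus_0_r; exact hu.
Qed.

Lemma formal_solution_radius c1 c2 : exists rad, 0 < rad /\ forall k,
  Rbar_le rad (CV_radius (PS_powS (formal_x c1 c2) k)) /\
  Rbar_le rad (CV_radius (PS_powS (formal_y c1 c2) k)).
Proof.
  set (M := 1 + row_norm c1 + row_norm c2).
  pose proof (row_norm_ge0 c1); pose proof (row_norm_ge0 c2).
  assert (hM : 1 <= M) by (unfold M; lra).
  assert (bounds := formal_solution_majorant M hM c1 c2 ltac:(unfold M; lra) ltac:(unfold M; lra)).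
  assert (hr : 0 < 512 * M ^ 2) by nra.
  exists (/ (512 * M ^ 2)); split; [apply Rinv_0_lt_compat; lra|].
  intros k; split; apply (CV_radius_ge_of_geom_bound _ (/ (64 * M))); auto;
    apply PS_powS_geom_bound; auto; intros n; apply bounds.
Qed.

Lemma quartic_fixed_point c1 c2 eps : 0 < eps ->
  exists rad, 0 < rad /\ exists X Y : nat -> R, X 0%nat = 0 /\ Y 0%nat = 0 /\
  forall u, Rabs u < rad ->
    is_pseries X u (PSeries X u) /\ is_pseries Y u (PSeries Y u) /\
    Rabs (PSeries X u) < eps /\ Rabs (PSeries Y u) < eps /\
    PSeries X u = row_eval c1 u (PSeries X u) (PSeries Y u) /\
    PSeries Y u = row_eval c2 u (PSeries X u) (PSeries Y u).
Proof.
  intros heps.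
  set (X := formal_x c1 c2); set (Y := formal_y c1 c2).
  destruct (formal_solution_radius c1 c2) as [r [hr hcv]].
  destruct (PSeries_small_near_0 X eps eq_refl
    (Rbar_lt_le_trans (Finite 0) (Finite r) _ hr (proj1 (hcv 0%nat))) heps) as [dX [hdX smallX]].
  destruct (PSeries_small_near_0 Y eps eq_refl
    (Rbar_lt_le_trans (Finite 0) (Finite r) _ hr (proj2 (hcv 0%nat))) heps) as [dY [hdY smallY]].
  exists (Rmin r (Rmin dX dY)); split; [repeat apply Rmin_pos; lra|].
  exists X, Y; split; [reflexivity|]; split; [reflexivity|].
  intros u hu.
  assert (Rabs u < r /\ Rabs u < dX /\ Rabs u < dY) as [hur [hudX hudY]].
  { pose proof (Rmin_l r (Rmin dX dY)); pose proof (Rmin_r r (Rmin dX dY));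
    pose proof (Rmin_l dX dY); pose proof (Rmin_r dX dY); repeat split; lra. }
  assert (inside : forall k, Rbar_lt (Rabs u) (CV_radius (PS_powS X k)) /\
                             Rbar_lt (Rabs u) (CV_radius (PS_powS Y k)))
    by (intros k; split; apply (Rbar_lt_le_trans (Finite (Rabs u)) (Finite r)); auto; apply hcv).
  assert (sX := PSeries_correct X u (CV_radius_inside _ _ (proj1 (inside 0%nat)))).
  assert (sY := PSeries_correct Y u (CV_radius_inside _ _ (proj2 (inside 0%nat)))).
  assert (powX := is_pseries_PS_powS X u _ sX (fun k => proj1 (inside k))).
  assert (powY := is_pseries_PS_powS Y u _ sY (fun k => proj2 (inside k))).
  repeat split; auto;
    apply is_pseries_unique; eapply is_pseries_ext;
    [| apply (is_pseries_row_coef c1 X Y u); auto | | apply (is_pseries_row_coef c2 X Y u); auto];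
    intros n; symmetry; apply (formal_solution_rec c1 c2 n).
Qed.

Lemma quartic_implicit_function j11 j12 j21 j22 v1 v2 eps :
  j11 * j22 - j12 * j21 <> 0 -> 0 < eps ->
  exists rad, 0 < rad /\ exists X Y : nat -> R, X 0%nat = 0 /\ Y 0%nat = 0 /\
  forall u, Rabs u < rad ->
    is_pseries X u (PSeries X u) /\ is_pseries Y u (PSeries Y u) /\
    Rabs (PSeries X u) < eps /\ Rabs (PSeries Y u) < eps /\
    j11 * PSeries X u + j12 * PSeries Y u + row_eval v1 u (PSeries X u) (PSeries Y u) = 0 /\
    j21 * PSeries X u + j22 * PSeries Y u + row_eval v2 u (PSeries X u) (PSeries Y u) = 0.
Proof.
  intros hD heps.
  set (D := j11 * j22 - j12 * j21) in hD.
  (* the fixed-point form [(x, y) = - J^-1 (v1, v2)] of the system *)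
  destruct (quartic_fixed_point (row_lincomb (- j22 / D) (j12 / D) v1 v2)
              (row_lincomb (j21 / D) (- j11 / D) v1 v2) eps heps)
    as [rad [hrad [X [Y [hX0 [hY0 H]]]]]].
  exists rad; split; [exact hrad|]; exists X, Y; split; [exact hX0|]; split; [exact hY0|].
  intros u hu; destruct (H u hu) as [sX [sY [smX [smY [fx fy]]]]].
  repeat split; auto;
    rewrite row_eval_lincomb in fx, fy;
    set (x := PSeries X u) in *; set (y := PSeries Y u) in *;
    set (w1 := row_eval v1 u x y) in *; set (w2 := row_eval v2 u x y) in *;
    clearbody w1 w2 x y; rewrite fx, fy; unfold D in *; field; exact hD.
Qed.

Lemma is_pseries_const_plus c X u v : is_pseries X u v ->
  is_pseries (fun n => c * 0 ^ n + X n) u (c + v).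
Proof.
  intros h.
  assert (mc : forall a : R, mult u a = mult a u) by (intros; apply Rmult_comm).
  assert (sum := is_pseries_plus _ _ _ _ _ (is_pseries_scal c _ _ _ (mc _) (is_pseries_delta u)) h).
  replace (c + v) with (plus (scal c 1) v) by (unfold plus, scal; simpl; unfold mult; simpl; ring).
  eapply is_pseries_ext; [|exact sum]; intros n; reflexivity.
Qed.

Lemma analytic_on_of_local_series (D : R -> Prop) f :
  (forall x0, D x0 -> exists (X : nat -> R) rad, 0 < rad /\
     forall x, D x -> Rabs (x - x0) < rad -> is_pseries X (x - x0) (f x - f x0)) ->
  analytic_on D f.
Proof.
  intros H x0 hx0; destruct (H x0 hx0) as [X [rad [hrad hX]]].
  exists (fun n => f x0 * 0 ^ n + X n), rad; split; auto.
  intros x hx hxr; replace (f x) with (f x0 + (f x - f x0)) by ring.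
  apply is_pseries_const_plus, hX; auto.
Qed.

Lemma pow_lt_pow_l x y n : 0 <= x -> x < y -> n <> 0%nat -> x ^ n < y ^ n.
Proof.
  intros hx hxy hn; induction n as [|n IH]; [lia|].
  destruct (Nat.eq_dec n 0) as [->|hn0]; [simpl; lra|].
  specialize (IH hn0); simpl.
  assert (0 < y ^ n) by (apply pow_lt; lra).
  assert (x * x ^ n <= x * y ^ n) by (apply Rmult_le_compat_l; lra).
  nra.
Qed.

Lemma pow_lt_inv x y n : 0 <= x -> 0 <= y -> x ^ n < y ^ n -> x < y.
Proof.
  intros hx hy h; destruct (Rlt_or_le x y) as [|hyx]; auto.
  assert (y ^ n <= x ^ n) by (apply pow_incr; lra); lra.
Qed.

Lemma pow_inj_l x y n : 0 <= x -> 0 <= y -> n <> 0%nat -> x ^ n = y ^ n -> x = y.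
Proof.
  intros hx hy hn h; destruct (Rtotal_order x y) as [hlt|[|hlt]]; auto;
    apply (pow_lt_pow_l _ _ n) in hlt; auto; lra.
Qed.

Lemma exists_pos_le3 a b c : 0 < a -> 0 < b -> 0 < c ->
  exists d, 0 < d /\ d <= a /\ d <= b /\ d <= c.
Proof.
  intros ha hb hc; exists (Rmin a (Rmin b c)).
  pose proof (Rmin_l a (Rmin b c)); pose proof (Rmin_r a (Rmin b c));
  pose proof (Rmin_l b c); pose proof (Rmin_r b c).
  repeat split; try lra; repeat apply Rmin_pos; lra.
Qed.

(** * Equilibria of the reduced model *)

(* The right-hand sides for nonnegative temperatures and a locally constant
   coalbedo [beta], with [Q = q beta]. *)
Definition Fa (e sg l a s : R) : R := - l * (a - s) + e * sg * s ^ 4 - 2 * e * sg * a ^ 4.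

Definition Fs (e sg Q l a s : R) : R := - l * (s - a) - sg * s ^ 4 + e * sg * a ^ 4 + Q.

Definition pos_equilibrium (e sg Q l a s : R) : Prop :=
  0 < a /\ 0 < s /\ Fa e sg l a s = 0 /\ Fs e sg Q l a s = 0.

Definition dFa_da (e sg l a : R) : R := - l - 8 * e * sg * a ^ 3.
Definition dFa_ds (e sg l s : R) : R := l + 4 * e * sg * s ^ 3.
Definition dFs_da (e sg l a : R) : R := l + 4 * e * sg * a ^ 3.
Definition dFs_ds (sg l s : R) : R := - l - 4 * sg * s ^ 3.

Definition Fa_row (e sg a s : R) : quartic_row :=
  QuarticRow (s - a) (-1) 1 (-12 * e * sg * a ^ 2) (-8 * e * sg * a) (-2 * e * sg)
    (6 * e * sg * s ^ 2) (4 * e * sg * s) (e * sg).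

Definition Fs_row (e sg a s : R) : quartic_row :=
  QuarticRow (a - s) 1 (-1) (6 * e * sg * a ^ 2) (4 * e * sg * a) (e * sg)
    (-6 * sg * s ^ 2) (-4 * sg * s) (- sg).

Lemma Fa_taylor e sg l a s u x y :
  Fa e sg (l + u) (a + x) (s + y) =
  Fa e sg l a s + dFa_da e sg l a * x + dFa_ds e sg l s * y + row_eval (Fa_row e sg a s) u x y.
Proof. unfold Fa, dFa_da, dFa_ds, row_eval; simpl; ring. Qed.

Lemma Fs_taylor e sg Q l a s u x y :
  Fs e sg Q (l + u) (a + x) (s + y) =
  Fs e sg Q l a s + dFs_da e sg l a * x + dFs_ds sg l s * y + row_eval (Fs_row e sg a s) u x y.
Proof. unfold Fs, dFs_da, dFs_ds, row_eval; simpl; ring. Qed.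

Section ReducedModel.

Variables e sg Q : R.
Hypothesis he : 0 < e < 2.
Hypothesis hsg : 0 < sg.
Hypothesis hQ : 0 < Q.

Lemma pos_equilibrium_of_nonneg l a s : 0 <= l -> 0 <= a -> 0 <= s ->
  Fa e sg l a s = 0 -> Fs e sg Q l a s = 0 -> pos_equilibrium e sg Q l a s.
Proof.
  unfold pos_equilibrium, Fa, Fs; intros hl ha hs ea es.
  assert (hes : 0 < e * sg) by nra.
  assert (hs0 : 0 < s).
  { destruct (Req_dec s 0) as [->|]; [|lra].
    assert (a ^ 4 = 0) by (pose proof (pow_le a 4 ha); nra).
    replace a with 0 in es by (symmetry; apply (pow_inj_l a 0 4); simpl; lra || lia).
    simpl in es; lra. }
  assert (0 < a).
  { destruct (Req_dec a 0) as [->|]; [|lra].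
    assert (0 < s ^ 4) by (apply pow_lt; lra); simpl in ea; nra. }
  repeat split; auto.
Qed.

Section AtEquilibrium.

Variables l a s : R.
Hypothesis hl : 0 <= l.
Hypothesis heq : pos_equilibrium e sg Q l a s.

Lemma pos_equilibrium_a_lt_s : a < s.
Proof.
  destruct heq as [ha [hs [ea _]]]; unfold Fa in ea.
  destruct (Rlt_or_le a s) as [|hsa]; auto.
  assert (s ^ 4 <= a ^ 4) by (apply pow_incr; lra).
  assert (0 < s ^ 4) by (apply pow_lt; lra).
  assert (0 < e * sg) by nra.
  assert (l * (a - s) >= 0) by nra.
  nra.
Qed.

Lemma pos_equilibrium_s4_le : s ^ 4 <= 2 * a ^ 4.
Proof.
  pose proof pos_equilibrium_a_lt_s; destruct heq as [ha [hs [ea _]]]; unfold Fa in ea.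
  assert (0 < e * sg) by nra; assert (l * (s - a) >= 0) by nra; nra.
Qed.

Lemma pos_equilibrium_s3_le : s ^ 3 <= 2 * a ^ 3.
Proof.
  pose proof pos_equilibrium_a_lt_s; pose proof pos_equilibrium_s4_le.
  destruct heq as [ha [hs _]].
  assert (0 < a ^ 3) by (apply pow_lt; lra).
  (* [s * s^3 = s^4 <= 2 a^4 = a * (2 a^3) < s * (2 a^3)] *)
  assert (s * s ^ 3 <= s * (2 * a ^ 3)) by nra.
  nra.
Qed.

(* The determinant is [4 l sg ((1-e) s^3 + e a^3) + 16 e (2-e) sg^2 a^3 s^3],
   and [s^3 <= 2 a^3] makes its first term nonnegative also when [e > 1]. *)
Lemma pos_equilibrium_det_pos :
  0 < dFa_da e sg l a * dFs_ds sg l s - dFa_ds e sg l s * dFs_da e sg l a.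
Proof.
  pose proof pos_equilibrium_s3_le; destruct heq as [ha [hs _]].
  replace (dFa_da e sg l a * dFs_ds sg l s - dFa_ds e sg l s * dFs_da e sg l a)
    with (4 * l * sg * ((1 - e) * s ^ 3 + e * a ^ 3) + 16 * e * (2 - e) * sg ^ 2 * a ^ 3 * s ^ 3)
    by (unfold dFa_da, dFa_ds, dFs_da, dFs_ds; ring).
  assert (0 < a ^ 3) by (apply pow_lt; lra); assert (0 < s ^ 3) by (apply pow_lt; lra).
  assert (0 <= (1 - e) * s ^ 3 + e * a ^ 3) by (destruct (Rle_or_lt e 1); nra).
  assert (0 <= 4 * l * sg * ((1 - e) * s ^ 3 + e * a ^ 3)).
  { apply Rmult_le_pos; [nra | lra]. }
  assert (0 < 16 * e * (2 - e) * sg ^ 2 * a ^ 3 * s ^ 3).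
  { repeat apply Rmult_lt_0_compat; try lra; apply pow_lt; lra. }
  lra.
Qed.

Lemma pos_equilibrium_analytic_branch eps : 0 < eps ->
  exists rad, 0 < rad /\ exists X Y : nat -> R, X 0%nat = 0 /\ Y 0%nat = 0 /\
  forall u, Rabs u < rad ->
    is_pseries X u (PSeries X u) /\ is_pseries Y u (PSeries Y u) /\
    Rabs (PSeries X u) < eps /\ Rabs (PSeries Y u) < eps /\
    Fa e sg (l + u) (a + PSeries X u) (s + PSeries Y u) = 0 /\
    Fs e sg Q (l + u) (a + PSeries X u) (s + PSeries Y u) = 0.
Proof.
  intros heps.
  destruct (quartic_implicit_function (dFa_da e sg l a) (dFa_ds e sg l s)
              (dFs_da e sg l a) (dFs_ds sg l s) (Fa_row e sg a s) (Fs_row e sg a s) eps)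
    as [rad [hrad [X [Y [hX0 [hY0 H]]]]]]; auto.
  { pose proof pos_equilibrium_det_pos; lra. }
  exists rad; split; auto; exists X, Y; do 2 (split; auto).
  intros u hu; destruct (H u hu) as [sX [sY [smX [smY [ea es]]]]].
  destruct heq as [_ [_ [ea0 es0]]].
  rewrite Fa_taylor, Fs_taylor, ea0, es0; repeat split; auto; lra.
Qed.

End AtEquilibrium.

Definition ratio_weight (t : R) : R := 1 - e + e * t ^ 4.

Definition lam_profile (t : R) : R := (2 * t ^ 4 - 1) ^ 4 / ((1 - t) ^ 4 * ratio_weight t ^ 3).

Definition lam_profile_deriv (t : R) : R :=
  (2 * t ^ 4 - 1) ^ 3 * (32 * t ^ 3 * (1 - t) * ratio_weight t
                         + 4 * (2 * t ^ 4 - 1) * ratio_weight t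
                         - 12 * e * t ^ 3 * (2 * t ^ 4 - 1) * (1 - t))
  / ((1 - t) ^ 5 * ratio_weight t ^ 4).

Lemma ratio_weight_pos t : 1 <= 2 * t ^ 4 -> 0 < ratio_weight t.
Proof. unfold ratio_weight; intros; nra. Qed.

Lemma is_derive_lam_profile t : t < 1 -> 0 < ratio_weight t ->
  is_derive lam_profile t (lam_profile_deriv t).
Proof.
  unfold lam_profile, lam_profile_deriv, ratio_weight; intros h1 h2.
  assert (e4 : t * (t * (t * (t * 1))) = t ^ 4) by ring.
  auto_derive.
  - rewrite ?e4; repeat apply Rmult_integral_contrapositive_currified; lra.
  - rewrite ?e4; field; lra.
Qed.

Lemma lam_profile_deriv_pos t : 0 < t -> 1 < 2 * t ^ 4 -> t < 1 -> 0 < lam_profile_deriv t.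
Proof.
  intros ht0 ht ht1; pose proof (ratio_weight_pos t ltac:(lra)) as hw.
  unfold lam_profile_deriv.
  replace (32 * t ^ 3 * (1 - t) * ratio_weight t + 4 * (2 * t ^ 4 - 1) * ratio_weight t
           - 12 * e * t ^ 3 * (2 * t ^ 4 - 1) * (1 - t))
    with (4 * t ^ 3 * (1 - t) * (8 - 5 * e + 2 * e * t ^ 4) + 4 * (2 * t ^ 4 - 1) * ratio_weight t)
    by (unfold ratio_weight; ring).
  assert (0 < t ^ 3) by (apply pow_lt; lra).
  assert (0 < 8 - 5 * e + 2 * e * t ^ 4) by nra.
  apply Rdiv_lt_0_compat.
  - apply Rmult_lt_0_compat; [apply pow_lt; lra|].
    apply Rplus_lt_0_compat; repeat apply Rmult_lt_0_compat; lra.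
  - apply Rmult_lt_0_compat; apply pow_lt; lra.
Qed.

Lemma lam_profile_lt t1 t2 : 0 < t1 -> 1 <= 2 * t1 ^ 4 -> t1 < t2 -> t2 < 1 ->
  lam_profile t1 < lam_profile t2.
Proof.
  intros h0 h1 h12 h2.
  assert (h4 : t1 ^ 4 < t2 ^ 4) by (apply pow_lt_pow_l; lra || lia).
  assert (positive : 0 < lam_profile t2).
  { pose proof (ratio_weight_pos t2 ltac:(lra)); unfold lam_profile.
    apply Rdiv_lt_0_compat; [apply pow_lt; lra | apply Rmult_lt_0_compat; apply pow_lt; lra]. }
  destruct (Req_dec (2 * t1 ^ 4) 1) as [edge|inner].
  - unfold lam_profile at 1; replace (2 * t1 ^ 4 - 1) with 0 by lra.
    unfold Rdiv; rewrite pow_i, Rmult_0_l by lia; exact positive.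
  - assert (above : forall t, t1 <= t -> 1 < 2 * t ^ 4).
    { intros t ht; assert (t1 ^ 4 <= t ^ 4) by (apply pow_incr; lra); lra. }
    apply (incr_function_le lam_profile t1 t2 lam_profile_deriv); simpl; try lra.
    + intros x hx1 hx2; apply is_derive_lam_profile; [lra|].
      apply ratio_weight_pos; pose proof (above x hx1); lra.
    + intros x hx1 hx2; apply lam_profile_deriv_pos; [lra | apply above | ]; lra.
Qed.

Lemma lam_profile_le t1 t2 : 0 < t1 -> 1 <= 2 * t1 ^ 4 -> t1 <= t2 -> t2 < 1 ->
  lam_profile t1 <= lam_profile t2.
Proof.
  intros h0 h1 h12 h2; destruct (Req_dec t1 t2) as [->|]; [lra|].
  apply Rlt_le, lam_profile_lt; lra.
Qed.

(* Adding the two equations eliminates [l]: [sg s^4 ratio_weight t = Q] with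
   [t = a/s]; then [Fa = 0] reads [l (1 - t) = e sg s^3 (2 t^4 - 1)]. *)
Lemma pos_equilibrium_ratio l a s : 0 <= l -> pos_equilibrium e sg Q l a s ->
  0 < a / s < 1 /\ 1 <= 2 * (a / s) ^ 4 /\
  l ^ 4 = e ^ 4 * sg * Q ^ 3 * lam_profile (a / s) /\ s ^ 4 * ratio_weight (a / s) = Q / sg.
Proof.
  intros hl heq.
  pose proof (pos_equilibrium_a_lt_s l a s hl heq) as has.
  pose proof (pos_equilibrium_s4_le l a s hl heq) as h24.
  destruct heq as [ha [hs [ea es]]].
  set (t := a / s).
  assert (hat : a = t * s) by (unfold t; field; lra).
  assert (ht : 0 < t < 1).
  { unfold t; split; [apply Rdiv_lt_0_compat; lra|].
    apply (Rmult_lt_reg_r s); [lra|]; unfold Rdiv; rewrite Rmult_assoc, Rinv_l; lra. }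
  assert (s4 : 0 < s ^ 4) by (apply pow_lt; lra).
  rewrite hat in h24, ea, es; unfold Fa, Fs in ea, es.
  assert (ht4 : 1 <= 2 * t ^ 4) by nra.
  assert (lam_eq : l * (1 - t) = e * sg * s ^ 3 * (2 * t ^ 4 - 1))
    by (apply (Rmult_eq_reg_l s); [nra | lra]).
  assert (sum_eq : s ^ 4 * ratio_weight t = Q / sg)
    by (unfold ratio_weight; apply (Rmult_eq_reg_l sg); [field_simplify; nra | lra]).
  pose proof (ratio_weight_pos t ht4).
  repeat split; try lra.
  replace (l ^ 4) with ((e * sg * s ^ 3 * (2 * t ^ 4 - 1)) ^ 4 / (1 - t) ^ 4)
    by (rewrite <- lam_eq; field; lra).
  replace ((e * sg * s ^ 3 * (2 * t ^ 4 - 1)) ^ 4)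
    with ((e * sg) ^ 4 * (s ^ 4) ^ 3 * (2 * t ^ 4 - 1) ^ 4) by ring.
  replace (s ^ 4) with (Q / sg / ratio_weight t) by (rewrite <- sum_eq; field; lra).
  unfold lam_profile; field; repeat split; lra.
Qed.

Section TwoEquilibria.

Variables l a s l' a' s' : R.
Hypothesis hl : 0 <= l.
Hypothesis hll' : l <= l'.
Hypothesis heq : pos_equilibrium e sg Q l a s.
Hypothesis heq' : pos_equilibrium e sg Q l' a' s'.

Let hK : 0 < e ^ 4 * sg * Q ^ 3.
Proof. repeat apply Rmult_lt_0_compat; try apply pow_lt; lra. Qed.

Lemma pos_equilibrium_ratio_le : a / s <= a' / s'.
Proof.
  destruct (pos_equilibrium_ratio l a s hl heq) as [ht [ht4 [hlam _]]].
  destruct (pos_equilibrium_ratio l' a' s' ltac:(lra) heq') as [ht' [ht4' [hlam' _]]].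
  destruct (Rle_or_lt (a / s) (a' / s')) as [|hlt]; auto.
  pose proof (lam_profile_lt _ _ (proj1 ht') ht4' hlt (proj2 ht)).
  assert (l' ^ 4 < l ^ 4) by (rewrite hlam, hlam'; apply Rmult_lt_compat_l; lra).
  assert (l ^ 4 <= l' ^ 4) by (apply pow_incr; lra).
  lra.
Qed.

Lemma pos_equilibrium_ratio_lt : l < l' -> a / s < a' / s'.
Proof.
  intros hlt.
  destruct (pos_equilibrium_ratio l a s hl heq) as [ht [ht4 [hlam _]]].
  destruct (pos_equilibrium_ratio l' a' s' ltac:(lra) heq') as [ht' [ht4' [hlam' _]]].
  destruct (Rlt_or_le (a / s) (a' / s')) as [|hge]; auto.
  pose proof (lam_profile_le _ _ (proj1 ht') ht4' hge (proj2 ht)).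
  assert (l' ^ 4 <= l ^ 4) by (rewrite hlam, hlam'; apply Rmult_le_compat_l; lra).
  assert (l ^ 4 < l' ^ 4) by (apply pow_lt_pow_l; lra || lia).
  lra.
Qed.

Lemma pos_equilibrium_coords_of_ratio :
  (a / s = a' / s' -> a = a' /\ s = s') /\
  (a / s < a' / s' -> s' < s /\ (e < 1 -> a < a') /\ (1 < e -> a' < a)).
Proof.
  destruct (pos_equilibrium_ratio l a s hl heq) as [ht [ht4 [_ hs4]]].
  destruct (pos_equilibrium_ratio l' a' s' ltac:(lra) heq') as [ht' [ht4' [_ hs4']]].
  destruct heq as [ha [hs _]]; destruct heq' as [ha' [hs' _]].
  set (t := a / s) in *; set (t' := a' / s') in *.
  assert (hat : a = t * s) by (unfold t; field; lra).
  assert (hat' : a' = t' * s') by (unfold t'; field; lra).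
  pose proof (ratio_weight_pos t ht4); pose proof (ratio_weight_pos t' ht4').
  assert (hS : s ^ 4 = Q / sg / ratio_weight t) by (rewrite <- hs4; field; lra).
  assert (hS' : s' ^ 4 = Q / sg / ratio_weight t') by (rewrite <- hs4'; field; lra).
  assert (hA : a ^ 4 = t ^ 4 * s ^ 4) by (rewrite hat; ring).
  assert (hA' : a' ^ 4 = t' ^ 4 * s' ^ 4) by (rewrite hat'; ring).
  assert (hQs : 0 < Q / sg) by (apply Rdiv_lt_0_compat; lra).
  split.
  - intros htt; rewrite <- htt in hS', hA'.
    assert (s = s') by (apply (pow_inj_l _ _ 4); lra || lia); split; [|auto].
    apply (pow_inj_l _ _ 4); try lra; try lia; rewrite hA, hA'; congruence.
  - intros htt; assert (t ^ 4 < t' ^ 4) by (apply pow_lt_pow_l; lra || lia).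
    assert (hw : ratio_weight t < ratio_weight t') by (unfold ratio_weight; nra).
    split; [apply (pow_lt_inv _ _ 4); try lra; rewrite hS, hS';
            apply Rmult_lt_compat_l; [lra | apply Rinv_lt_contravar; nra]|].
    (* [a^4 = (Q/sg) t^4 / (1 - e + e t^4)], whose variation in [t] has the sign of [1 - e] *)
    assert (hdiff : a' ^ 4 - a ^ 4 =
      (1 - e) * (Q / sg * (t' ^ 4 - t ^ 4) / (ratio_weight t * ratio_weight t'))).
    { rewrite hA, hA', hS, hS'; unfold ratio_weight in *; field; split; lra. }
    assert (0 < Q / sg * (t' ^ 4 - t ^ 4) / (ratio_weight t * ratio_weight t'))
      by (apply Rdiv_lt_0_compat; [apply Rmult_lt_0_compat | apply Rmult_lt_0_compat]; lra).
    split; intros he1; apply (pow_lt_inv _ _ 4); nra.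
Qed.

End TwoEquilibria.

Lemma pos_equilibrium_unique l a s a' s' : 0 <= l ->
  pos_equilibrium e sg Q l a s -> pos_equilibrium e sg Q l a' s' -> a = a' /\ s = s'.
Proof.
  intros hl heq heq'.
  apply (pos_equilibrium_coords_of_ratio l a s l a' s'); auto; try lra.
  apply Rle_antisym; apply pos_equilibrium_ratio_le with l l; auto; lra.
Qed.

Lemma pos_equilibrium_monotone l a s l' a' s' : 0 <= l -> l < l' ->
  pos_equilibrium e sg Q l a s -> pos_equilibrium e sg Q l' a' s' ->
  s' < s /\ (e < 1 -> a < a') /\ (1 < e -> a' < a).
Proof.
  intros hl hll' heq heq'.
  apply (pos_equilibrium_coords_of_ratio l a s l' a' s'); auto; try lra.
  apply pos_equilibrium_ratio_lt with l l'; auto; lra.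
Qed.

Lemma pos_equilibrium_branch l0 a0 s0 eps : 0 <= l0 -> pos_equilibrium e sg Q l0 a0 s0 ->
  0 < eps -> eps <= a0 -> eps <= s0 ->
  exists dl (Ta Ts : R -> R), 0 < dl /\ Ta l0 = a0 /\ Ts l0 = s0 /\
  forall l, 0 <= l -> Rabs (l - l0) < dl ->
    pos_equilibrium e sg Q l (Ta l) (Ts l) /\ Rabs (Ta l - a0) < eps /\ Rabs (Ts l - s0) < eps.
Proof.
  intros hl0 heq0 heps ha hs.
  destruct (pos_equilibrium_analytic_branch l0 a0 s0 hl0 heq0 eps heps)
    as [dl [hdl [X [Y [hX0 [hY0 H]]]]]].
  exists dl, (fun l => a0 + PSeries X (l - l0)), (fun l => s0 + PSeries Y (l - l0)).
  split; [exact hdl|].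
  rewrite Rminus_diag, !PSeries_0, hX0, hY0, !Rplus_0_r.
  split; [reflexivity|]; split; [reflexivity|].
  intros l hl hll0; destruct (H (l - l0) hll0) as [_ [_ [smX [smY [ea es]]]]].
  replace (l0 + (l - l0)) with l in ea, es by ring.
  replace (a0 + PSeries X (l - l0) - a0) with (PSeries X (l - l0)) by ring.
  replace (s0 + PSeries Y (l - l0) - s0) with (PSeries Y (l - l0)) by ring.
  apply Rabs_def2 in smX as smX'; apply Rabs_def2 in smY as smY'.
  repeat split; auto; lra.
Qed.

Section EquilibriumFamily.

Variables (D : R -> Prop) (Ta Ts : R -> R).
Hypothesis hfam : forall l, D l -> 0 <= l /\ pos_equilibrium e sg Q l (Ta l) (Ts l).

(* By global uniqueness, the local power-series branch through any member of
   the family is the family itself. *)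
Lemma pos_equilibria_local_series x0 : D x0 -> exists (X Y : nat -> R) rad, 0 < rad /\
  forall x, D x -> Rabs (x - x0) < rad ->
    is_pseries X (x - x0) (Ta x - Ta x0) /\ is_pseries Y (x - x0) (Ts x - Ts x0).
Proof.
  intros hx0; destruct (hfam x0 hx0) as [hl0 heq0].
  pose proof heq0 as [ha0 [hs0 _]].
  set (eps := Rmin (Ta x0) (Ts x0) / 2).
  assert (0 < eps /\ eps <= Ta x0 / 2 /\ eps <= Ts x0 / 2) as [heps [hepsa hepss]]
    by (unfold eps; pose proof (Rmin_pos _ _ ha0 hs0); pose proof (Rmin_l (Ta x0) (Ts x0));
        pose proof (Rmin_r (Ta x0) (Ts x0)); lra).
  destruct (pos_equilibrium_analytic_branch x0 (Ta x0) (Ts x0) hl0 heq0 eps heps)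
    as [rad [hrad [X [Y [_ [_ H]]]]]].
  exists X, Y, rad; split; auto; intros x hx hxr.
  destruct (H (x - x0) hxr) as [sX [sY [smX [smY [ea es]]]]].
  replace (x0 + (x - x0)) with x in ea, es by ring.
  apply Rabs_def2 in smX; apply Rabs_def2 in smY.
  destruct (hfam x hx) as [hl heq].
  destruct (pos_equilibrium_unique x (Ta x) (Ts x)
              (Ta x0 + PSeries X (x - x0)) (Ts x0 + PSeries Y (x - x0)) hl heq)
    as [-> ->]; [repeat split; auto; lra|].
  replace (Ta x0 + PSeries X (x - x0) - Ta x0) with (PSeries X (x - x0)) by ring.
  replace (Ts x0 + PSeries Y (x - x0) - Ts x0) with (PSeries Y (x - x0)) by ring.
  split; auto.
Qed.

Lemma analytic_on_pos_equilibria : analytic_on D Ta /\ analytic_on D Ts.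
Proof.
  split; apply analytic_on_of_local_series; intros x0 hx0;
    destruct (pos_equilibria_local_series x0 hx0) as [X [Y [rad [hrad H]]]].
  - exists X, rad; split; auto; intros x hx hxr; apply (H x hx hxr).
  - exists Y, rad; split; auto; intros x hx hxr; apply (H x hx hxr).
Qed.

Lemma pos_equilibria_monotone :
  strictly_decreasing_on D Ts /\
  (e < 1 -> strictly_increasing_on D Ta) /\ (1 < e -> strictly_decreasing_on D Ta).
Proof.
  assert (mono : forall x y, D x -> D y -> x < y ->
    Ts y < Ts x /\ (e < 1 -> Ta x < Ta y) /\ (1 < e -> Ta y < Ta x)).
  { intros x y hx hy hxy; destruct (hfam x hx) as [hlx hx']; destruct (hfam y hy) as [_ hy'].
    exact (pos_equilibrium_monotone x (Ta x) (Ts x) y (Ta y) (Ts y) hlx hxy hx' hy'). }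
  split; [|split]; [|intros he1 | intros he1]; intros x y hx hy hxy;
    apply (mono x y hx hy hxy); auto.
Qed.

End EquilibriumFamily.

End ReducedModel.

(** * Lyapunov stability of planar systems *)

Definition right_continuous_at_0 (f : R -> R) : Prop := filterlim f (at_right 0) (locally (f 0)).

Lemma right_continuous_at_0_eps f : right_continuous_at_0 f ->
  forall d, 0 < d -> exists nu, 0 < nu /\ forall t, 0 < t < nu -> Rabs (f t - f 0) < d.
Proof.
  intros hf d hd.
  assert (near : locally (f 0) (fun y => Rabs (y - f 0) < d))
    by (exists (mkposreal d hd); intros y hy; exact hy).
  destruct (hf _ near) as [nu hnu].
  exists nu; split; [apply cond_pos|]; intros t ht; apply hnu; [|lra].
  change (Rabs (t - 0) < nu); rewrite Rminus_0_r, Rabs_pos_eq; lra.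
Qed.

Lemma right_continuous_at_0_derivable g : (forall y, ex_derive g y) -> right_continuous_at_0 g.
Proof.
  intros hg; eapply filterlim_filter_le_1; [apply filter_le_within|].
  exact (ex_derive_continuous g 0 (hg 0)).
Qed.

Lemma right_continuous_at_0_comp f g : right_continuous_at_0 f -> (forall y, ex_derive g y) ->
  right_continuous_at_0 (fun t => g (f t)).
Proof.
  intros hf hg; eapply filterlim_comp; [exact hf|].
  exact (ex_derive_continuous g (f 0) (hg (f 0))).
Qed.

Lemma right_continuous_at_0_plus f g : right_continuous_at_0 f -> right_continuous_at_0 g ->
  right_continuous_at_0 (fun t => f t + g t).
Proof.
  intros hf hg; eapply filterlim_comp_2; [exact hf | exact hg | apply (filterlim_plus (f 0) (g 0))].
Qed.

Lemma right_continuous_at_0_mult f g : right_continuous_at_0 f -> right_continuous_at_0 g ->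
  right_continuous_at_0 (fun t => f t * g t).
Proof.
  intros hf hg; eapply filterlim_comp_2; [exact hf | exact hg | apply (filterlim_mult (f 0) (g 0))].
Qed.

Lemma continuous_of_is_derive (h : R -> R) dh x : is_derive h x dh ->
  forall d, 0 < d -> exists nu, 0 < nu /\ forall t, Rabs (t - x) < nu -> Rabs (h t - h x) < d.
Proof.
  intros hd d hdpos.
  assert (c : continuity_pt h x)
    by (apply derivable_continuous_pt, ex_derive_Reals_0; eexists; eauto).
  destruct (proj1 (continuity_pt_locally _ _) c (mkposreal d hdpos)) as [nu hnu].
  exists nu; split; [apply cond_pos|]; intros t ht; apply hnu; exact ht.
Qed.

Lemma nonincreasing_of_deriv_nonpos (h dh : R -> R) p q : p < q ->
  (forall t, p <= t <= q -> is_derive h t (dh t)) -> (forall t, p <= t <= q -> dh t <= 0) ->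
  h q <= h p.
Proof.
  intros hpq hd hneg.
  destruct (MVT_gen h p q dh) as [c [hc E]];
    rewrite ?Rmin_left, ?Rmax_right in * by lra.
  - intros x hx; apply hd; lra.
  - intros x hx; apply derivable_continuous_pt, ex_derive_Reals_0; eexists; apply hd; lra.
  - assert (dh c * (q - p) <= 0) by (apply Rmult_le_0_r; [apply hneg | ]; lra); lra.
Qed.

Section Barrier.

Variables (h dh : R -> R) (T eta : R).
Hypothesis heta : 0 < eta.
Hypothesis hderiv : forall t, 0 < t < T -> is_derive h t (dh t).
Hypothesis hright0 :
  forall d, 0 < d -> exists nu, 0 < nu /\ forall t, 0 < t < nu -> Rabs (h t - h 0) < d.
Hypothesis hbelow : forall t, 0 < t < T -> h t < eta -> dh t <= 0.

Let right_continuous tau : 0 <= tau < T ->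
  forall d, 0 < d -> exists nu, 0 < nu /\ forall t, tau < t < tau + nu -> Rabs (h t - h tau) < d.
Proof.
  intros htau d hd; destruct (Req_dec tau 0) as [->|ne].
  - destruct (hright0 d hd) as [nu [hnu H]]; exists nu; split; auto; intros t ht; apply H; lra.
  - destruct (continuous_of_is_derive h (dh tau) tau (hderiv tau ltac:(lra)) d hd) as [nu [hnu H]].
    exists nu; split; auto; intros t ht; apply H; rewrite Rabs_pos_eq; lra.
Qed.

Let nonpos_after tau t2 : 0 <= tau -> tau < t2 < T -> h tau <= 0 ->
  (forall t, tau < t <= t2 -> h t < eta) -> h t2 <= 0.
Proof.
  intros h0 [htau ht2] hhtau hlt.
  assert (mono : forall tp, tau < tp < t2 -> h t2 <= h tp).
  { intros tp htp; apply (nonincreasing_of_deriv_nonpos h dh tp t2); try lra.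
    - intros t ht; apply hderiv; lra.
    - intros t ht; apply hbelow; [lra | apply hlt; lra]. }
  destruct (Rle_or_lt (h t2) (h tau)) as [|gt]; [lra|].
  destruct (right_continuous tau ltac:(lra) (h t2 - h tau) ltac:(lra)) as [nu [hnu H]].
  set (tp := Rmin (tau + nu / 2) ((tau + t2) / 2)).
  assert (tau < tp <= (tau + t2) / 2 /\ tp <= tau + nu / 2)
    by (unfold tp; repeat split; [apply Rmin_glb_lt; lra | apply Rmin_r | apply Rmin_l]).
  assert (hclose : Rabs (h tp - h tau) < h t2 - h tau) by (apply H; lra).
  apply Rabs_def2 in hclose; pose proof (mono tp ltac:(lra)); lra.
Qed.

Lemma nonpos_of_deriv_nonpos_below : h 0 <= 0 -> forall t, 0 <= t < T -> h t <= 0.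
Proof.
  intros h0 t1 ht1; destruct (Rle_or_lt (h t1) 0) as [|bad]; auto; exfalso.
  assert (t1pos : 0 < t1) by (destruct (Req_dec t1 0) as [->|]; lra).
  set (E := fun t => 0 <= t <= t1 /\ h t <= 0).
  destruct (completeness E) as [tau [ub lub]].
  { exists t1; intros x [hx _]; lra. }
  { exists 0; split; lra. }
  assert (htau : 0 <= tau <= t1) by (split; [apply ub; split | apply lub; intros x [hx _]]; lra).
  assert (hhtau : h tau <= 0).
  { destruct (Rle_or_lt (h tau) 0) as [|pos]; auto; exfalso.
    destruct (Req_dec tau 0) as [e0|ne0]; [rewrite e0 in pos; lra|].
    destruct (continuous_of_is_derive h (dh tau) tau (hderiv tau ltac:(lra)) (h tau) pos)
      as [nu [hnu H]].
    (* no point of [E] lies in [(tau - nu, tau]], so [tau - nu/2] is a smaller upper bound *)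
    assert (tau <= tau - nu / 2); [|lra].
    apply lub; intros x [hx hhx]; destruct (Rle_or_lt x (tau - nu / 2)) as [|l]; auto.
    assert (x <= tau) by (apply ub; split; auto).
    assert (hclose : Rabs (h x - h tau) < h tau) by (apply H; rewrite Rabs_left1; lra).
    rewrite Rabs_left1 in hclose; lra. }
  assert (tlt : tau < t1) by (destruct (Req_dec tau t1) as [->|]; lra).
  destruct (right_continuous tau ltac:(lra) (eta - h tau) ltac:(lra)) as [nu [hnu H]].
  set (t2 := Rmin (tau + nu / 2) t1).
  assert (tau < t2 <= t1 /\ t2 <= tau + nu / 2)
    by (unfold t2; repeat split; [apply Rmin_glb_lt; lra | apply Rmin_r | apply Rmin_l]).
  assert (h t2 <= 0).
  { apply (nonpos_after tau); try lra.
    intros t ht; assert (hclose : Rabs (h t - h tau) < eta - h tau) by (apply H; lra).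
    apply Rabs_def2 in hclose; lra. }
  assert (t2 <= tau) by (apply ub; split; lra).
  lra.
Qed.

End Barrier.

Lemma exp_decay_of_deriv_le (V dV : R -> R) T k B : 0 <= k -> 0 < B ->
  right_continuous_at_0 V -> (forall t, 0 < t < T -> is_derive V t (dV t)) ->
  (forall t, 0 < t < T -> V t < B -> dV t <= - k * V t) ->
  V 0 < B -> forall t, 0 <= t < T -> V t <= V 0 * exp (- k * t).
Proof.
  intros hk hB hV0 hV hdecay hstart.
  set (h := fun t => V t * exp (k * t) - V 0).
  set (dh := fun t => exp (k * t) * (dV t + k * V t)).
  assert (hd : forall t, 0 < t < T -> is_derive h t (dh t)).
  { intros t ht; unfold h, dh; auto_derive; [eexists; apply hV; auto|].
    change (Derive (fun x => V x) t) with (Derive V t).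
    rewrite (is_derive_unique V t (dV t)) by auto; ring. }
  assert (hrc : right_continuous_at_0 h).
  { apply right_continuous_at_0_plus with (g := fun _ => - V 0);
      [apply right_continuous_at_0_mult with (g := fun t => exp (k * t)); auto|];
      apply right_continuous_at_0_derivable; intros; auto_derive; auto. }
  assert (hbelow : forall t, 0 < t < T -> h t < B - V 0 -> dh t <= 0).
  { intros t ht hht; unfold h, dh in *.
    assert (1 <= exp (k * t)) by (pose proof (exp_ineq1_le (k * t)); nra).
    assert (V t < B) by (destruct (Rle_or_lt (V t) 0); nra).
    pose proof (hdecay t ht ltac:(lra)); pose proof (exp_pos (k * t)); nra. }
  intros t ht.
  assert (hneg := nonpos_of_deriv_nonpos_below h dh T (B - V 0) ltac:(lra) hd
    (right_continuous_at_0_eps h hrc) hbelow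
    ltac:(unfold h; rewrite Rmult_0_r, exp_0; lra) t ht).
  unfold h in hneg.
  replace (V t) with (V t * exp (k * t) * exp (- k * t))
    by (rewrite Rmult_assoc, <- exp_plus; replace (k * t + - k * t) with 0 by ring;
        rewrite exp_0; ring).
  apply Rmult_le_compat_r; [apply Rlt_le, exp_pos | lra].
Qed.

Lemma abs_lt_of_sqr_lt x rho : 0 < rho -> x ^ 2 < rho ^ 2 -> Rabs x < rho.
Proof.
  intros hr h; destruct (Rcase_abs x); [rewrite Rabs_left | rewrite Rabs_right]; nra.
Qed.

Lemma dist2_ge0 a1 s1 a2 s2 : 0 <= dist2 a1 s1 a2 s2.
Proof. apply sqrt_pos. Qed.

Lemma dist2_sqr a1 s1 a2 s2 : dist2 a1 s1 a2 s2 ^ 2 = (a1 - a2) ^ 2 + (s1 - s2) ^ 2.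
Proof.
  unfold dist2; apply pow2_sqrt.
  pose proof (pow2_ge_0 (a1 - a2)); pose proof (pow2_ge_0 (s1 - s2)); lra.
Qed.

Lemma dist2_lt_of_abs_lt a1 s1 a2 s2 d : Rabs (a1 - a2) < d -> Rabs (s1 - s2) < d ->
  dist2 a1 s1 a2 s2 < 2 * d.
Proof.
  intros ha hs; pose proof (dist2_ge0 a1 s1 a2 s2); pose proof (dist2_sqr a1 s1 a2 s2).
  apply Rabs_def2 in ha; apply Rabs_def2 in hs; nra.
Qed.

Lemma abs_lt_of_dist2_lt a1 s1 a2 s2 d : dist2 a1 s1 a2 s2 < d -> Rabs (s1 - s2) < d.
Proof.
  intros h; pose proof (dist2_ge0 a1 s1 a2 s2); pose proof (dist2_sqr a1 s1 a2 s2).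
  apply abs_lt_of_sqr_lt; [lra|]; pose proof (pow2_ge_0 (a1 - a2)); nra.
Qed.

Section PlanarLyapunov.

Variables (ga gs w1 w2 c rho a s : R) (F1 F2 : R -> R -> R).
Hypotheses (hga : 0 < ga) (hgs : 0 < gs) (hw1 : 0 < w1) (hw2 : 0 < w2).
Hypotheses (hc : 0 < c) (hrho : 0 < rho).
Hypothesis hlyap : forall x y, x ^ 2 + y ^ 2 < rho ^ 2 ->
  2 * w1 * x * F1 x y + 2 * w2 * y * F2 x y <= - c * (x ^ 2 + y ^ 2).

Let m := Rmin (ga * w1) (gs * w2).
Let Mv := ga * w1 + gs * w2.

Let hm : 0 < m.
Proof. unfold m; apply Rmin_glb_lt; nra. Qed.

Let hMv : 0 < Mv.
Proof. unfold Mv; nra. Qed.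

Let energy_bounds x y :
  m * (x ^ 2 + y ^ 2) <= ga * w1 * x ^ 2 + gs * w2 * y ^ 2 <= Mv * (x ^ 2 + y ^ 2).
Proof.
  assert (m <= ga * w1 /\ m <= gs * w2) as [h1 h2]
    by (unfold m; split; [apply Rmin_l | apply Rmin_r]).
  pose proof (pow2_ge_0 x); pose proof (pow2_ge_0 y).
  assert (0 <= (ga * w1 - m) * x ^ 2 + (gs * w2 - m) * y ^ 2)
    by (apply Rplus_le_le_0_compat; apply Rmult_le_pos; lra).
  assert (0 <= gs * w2 * x ^ 2 + ga * w1 * y ^ 2) by nra.
  unfold Mv; split; nra.
Qed.

Lemma planar_energy_decay Tend (xa xs : R -> R) :
  right_continuous_at_0 xa -> right_continuous_at_0 xs ->
  (forall t, 0 < t < Tend -> is_derive xa t (F1 (xa t - a) (xs t - s) / ga) /\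
                            is_derive xs t (F2 (xa t - a) (xs t - s) / gs)) ->
  ga * w1 * (xa 0 - a) ^ 2 + gs * w2 * (xs 0 - s) ^ 2 < m * rho ^ 2 ->
  forall t, 0 <= t < Tend ->
    ga * w1 * (xa t - a) ^ 2 + gs * w2 * (xs t - s) ^ 2 <=
    (ga * w1 * (xa 0 - a) ^ 2 + gs * w2 * (xs 0 - s) ^ 2) * exp (- (c / Mv) * t).
Proof.
  intros hra hrs hder hV0.
  apply (exp_decay_of_deriv_le (fun t => ga * w1 * (xa t - a) ^ 2 + gs * w2 * (xs t - s) ^ 2)
    (fun t => 2 * w1 * (xa t - a) * F1 (xa t - a) (xs t - s)
              + 2 * w2 * (xs t - s) * F2 (xa t - a) (xs t - s)) Tend (c / Mv) (m * rho ^ 2));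
    auto.
  - apply Rlt_le, Rdiv_lt_0_compat; lra.
  - apply Rmult_lt_0_compat; [lra | apply pow_lt; lra].
  - apply right_continuous_at_0_plus;
      apply (right_continuous_at_0_comp _ (fun p => _ * (p - _) ^ 2)); auto;
      intros; auto_derive; auto.
  - intros t ht; destruct (hder t ht) as [da ds].
    auto_derive; [repeat split; eexists; eauto|].
    change (Derive (fun x => xa x) t) with (Derive xa t);
      change (Derive (fun x => xs x) t) with (Derive xs t).
    rewrite (is_derive_unique _ _ _ da), (is_derive_unique _ _ _ ds); field; lra.
  - intros t ht hVt; set (x := xa t - a) in *; set (y := xs t - s) in *.
    destruct (energy_bounds x y) as [lo hi].
    assert (hxy : x ^ 2 + y ^ 2 < rho ^ 2) by (apply (Rmult_lt_reg_l m); lra).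
    pose proof (hlyap x y hxy).
    assert (c / Mv * (ga * w1 * x ^ 2 + gs * w2 * y ^ 2) <= c * (x ^ 2 + y ^ 2)).
    { apply (Rmult_le_reg_l Mv); [lra|].
      replace (Mv * (c / Mv * (ga * w1 * x ^ 2 + gs * w2 * y ^ 2)))
        with (c * (ga * w1 * x ^ 2 + gs * w2 * y ^ 2)) by (field; lra).
      nra. }
    lra.
Qed.

Let energy_small_near x y : x ^ 2 + y ^ 2 < (rho * m / Mv) ^ 2 ->
  ga * w1 * x ^ 2 + gs * w2 * y ^ 2 < m * rho ^ 2.
Proof.
  intros hxy; destruct (energy_bounds x y) as [_ hi].
  assert (hmM : m <= Mv) by (destruct (energy_bounds 1 0) as [lo hi']; simpl in lo, hi'; lra).
  assert (Mv * (rho * m / Mv) ^ 2 <= m * rho ^ 2).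
  { replace (Mv * (rho * m / Mv) ^ 2) with (m * rho ^ 2 * (m / Mv)) by (field; lra).
    assert (m / Mv <= 1) by (apply (Rmult_le_reg_r Mv); [lra|]; field_simplify; lra).
    assert (0 < m * rho ^ 2) by (apply Rmult_lt_0_compat; [lra | apply pow_lt; lra]).
    nra. }
  nra.
Qed.

Lemma planar_exp_stability : exists delta C mu, 0 < delta /\ 0 < C /\ 0 < mu /\
  forall Tend (xa xs : R -> R),
    right_continuous_at_0 xa -> right_continuous_at_0 xs ->
    (forall t, 0 < t < Tend -> is_derive xa t (F1 (xa t - a) (xs t - s) / ga) /\
                              is_derive xs t (F2 (xa t - a) (xs t - s) / gs)) ->
    dist2 (xa 0) (xs 0) a s < delta ->
    forall t, 0 <= t < Tend ->
      dist2 (xa t) (xs t) a s <= C * exp (- mu * t) * dist2 (xa 0) (xs 0) a s.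
Proof.
  assert (hK : 0 < Mv / m) by (apply Rdiv_lt_0_compat; lra).
  exists (rho * m / Mv), (sqrt (Mv / m)), (c / Mv / 2).
  split; [apply Rdiv_lt_0_compat; nra|]; split; [apply sqrt_lt_R0; lra|];
    split; [apply Rdiv_lt_0_compat; [apply Rdiv_lt_0_compat|]; lra|].
  intros Tend xa xs hra hrs hder hd0 t ht.
  pose proof (dist2_ge0 (xa 0) (xs 0) a s); pose proof (dist2_ge0 (xa t) (xs t) a s).
  pose proof (dist2_sqr (xa 0) (xs 0) a s) as sq0; pose proof (dist2_sqr (xa t) (xs t) a s) as sqt.
  set (d0 := dist2 (xa 0) (xs 0) a s) in *; set (dt := dist2 (xa t) (xs t) a s) in *.
  assert (hV0 := energy_small_near (xa 0 - a) (xs 0 - s)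
    ltac:(rewrite <- sq0; assert (0 < rho * m / Mv) by (apply Rdiv_lt_0_compat; nra); nra)).
  pose proof (planar_energy_decay Tend xa xs hra hrs hder hV0 t ht) as decay.
  set (E := exp (- (c / Mv) * t)) in decay.
  assert (hE : 0 < E) by apply exp_pos.
  (* [m dt^2 <= energy t <= E energy 0 <= E Mv d0^2] *)
  assert (hsq : dt ^ 2 <= Mv / m * E * d0 ^ 2).
  { destruct (energy_bounds (xa 0 - a) (xs 0 - s)) as [_ hi0].
    destruct (energy_bounds (xa t - a) (xs t - s)) as [lot _].
    apply (Rmult_le_reg_l m); [lra|].
    replace (m * (Mv / m * E * d0 ^ 2)) with (E * (Mv * d0 ^ 2)) by (field; lra).
    rewrite sqt, sq0 in *; nra. }
  assert (hrhs : (sqrt (Mv / m) * exp (- (c / Mv / 2) * t) * d0) ^ 2 = Mv / m * E * d0 ^ 2).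
  { rewrite !Rpow_mult_distr, pow2_sqrt by lra; unfold E; simpl.
    rewrite Rmult_1_r, <- exp_plus; replace (- (c / Mv / 2) * t + - (c / Mv / 2) * t)
      with (- (c / Mv) * t) by (field; lra); ring. }
  assert (0 <= sqrt (Mv / m) * exp (- (c / Mv / 2) * t) * d0)
    by (apply Rmult_le_pos; [apply Rmult_le_pos; [apply sqrt_pos | apply Rlt_le, exp_pos] | lra]).
  nra.
Qed.

End PlanarLyapunov.

Lemma pow_SS_abs_le_sqr x k : Rabs x <= 1 -> Rabs (x ^ S (S k)) <= x ^ 2.
Proof.
  intros hx; rewrite <- RPow_abs, <- pow2_abs.
  replace (S (S k)) with (2 + k)%nat by lia; rewrite pow_add.
  pose proof (pow_incr (Rabs x) 1 k ltac:(split; [apply Rabs_pos | exact hx])).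
  rewrite pow1 in *; pose proof (pow_le (Rabs x) k (Rabs_pos x)).
  pose proof (pow2_ge_0 (Rabs x)); nra.
Qed.

Lemma row_eval_0_bound c x y : Rabs x <= 1 -> Rabs y <= 1 ->
  Rabs (row_eval c 0 x y) <= row_norm c * (x ^ 2 + y ^ 2).
Proof.
  intros hx hy.
  replace (row_eval c 0 x y) with
    ((row_x2 c * x ^ 2 + row_x3 c * x ^ 3 + row_x4 c * x ^ 4)
     + (row_y2 c * y ^ 2 + row_y3 c * y ^ 3 + row_y4 c * y ^ 4)) by (unfold row_eval; ring).
  eapply Rle_trans; [apply Rabs_triang|].
  assert (bx := Rabs_lincomb3_le (row_x2 c) (row_x3 c) (row_x4 c) _ _ _ (x ^ 2)
    (pow_SS_abs_le_sqr x 0 hx) (pow_SS_abs_le_sqr x 1 hx) (pow_SS_abs_le_sqr x 2 hx)).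
  assert (by' := Rabs_lincomb3_le (row_y2 c) (row_y3 c) (row_y4 c) _ _ _ (y ^ 2)
    (pow_SS_abs_le_sqr y 0 hy) (pow_SS_abs_le_sqr y 1 hy) (pow_SS_abs_le_sqr y 2 hy)).
  destruct (row_norm_parts c) as [_ [_ hnl]].
  pose proof (Rabs_pos (row_x2 c)); pose proof (Rabs_pos (row_x3 c));
  pose proof (Rabs_pos (row_x4 c)); pose proof (Rabs_pos (row_y2 c));
  pose proof (Rabs_pos (row_y3 c)); pose proof (Rabs_pos (row_y4 c)).
  pose proof (pow2_ge_0 x); pose proof (pow2_ge_0 y); nra.
Qed.

Lemma quad_form_lower_bound al be gm x y : 0 < al -> 0 < gm -> 0 < al * gm - be ^ 2 ->
  (al * gm - be ^ 2) / (al + gm) * (x ^ 2 + y ^ 2) <= al * x ^ 2 - 2 * be * x * y + gm * y ^ 2.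
Proof.
  intros h1 h2 h3; apply (Rmult_le_reg_l (al + gm)); [lra|].
  replace ((al + gm) * ((al * gm - be ^ 2) / (al + gm) * (x ^ 2 + y ^ 2)))
    with ((al * gm - be ^ 2) * (x ^ 2 + y ^ 2)) by (field; lra).
  (* [(al + gm) q(x, y) - (al gm - be^2) (x^2 + y^2) = (al x - be y)^2 + (be x - gm y)^2] *)
  pose proof (pow2_ge_0 (al * x - be * y)); pose proof (pow2_ge_0 (be * x - gm * y)); nra.
Qed.

Lemma weighted_row_remainder_le w1 w2 v1 v2 rho x y :
  0 <= w1 -> 0 <= w2 -> rho <= 1 -> Rabs x < rho -> Rabs y < rho ->
  2 * w1 * (x * row_eval v1 0 x y) + 2 * w2 * (y * row_eval v2 0 x y)
  <= rho * (2 * (w1 + w2) * (row_norm v1 + row_norm v2 + 1)) * (x ^ 2 + y ^ 2).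
Proof.
  intros h1 h2 hrho hx hy.
  pose proof (row_norm_ge0 v1); pose proof (row_norm_ge0 v2); pose proof (Rabs_pos x).
  set (z2 := x ^ 2 + y ^ 2).
  assert (hz : 0 <= z2) by (unfold z2; pose proof (pow2_ge_0 x); pose proof (pow2_ge_0 y); lra).
  assert (remainder : forall v w, Rabs w < rho -> w * row_eval v 0 x y <= rho * (row_norm v * z2)).
  { intros v w hw; eapply Rle_trans; [apply Rle_abs|]; rewrite Rabs_mult.
    apply Rmult_le_compat; try apply Rabs_pos; [lra|].
    apply row_eval_0_bound; lra. }
  pose proof (remainder v1 x hx); pose proof (remainder v2 y hy).
  assert (hp : 0 <= rho * z2) by (apply Rmult_le_pos; lra).
  assert (2 * w1 * (x * row_eval v1 0 x y) <= 2 * w1 * (rho * (row_norm v1 * z2)))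
    by (apply Rmult_le_compat_l; lra).
  assert (2 * w2 * (y * row_eval v2 0 x y) <= 2 * w2 * (rho * (row_norm v2 * z2)))
    by (apply Rmult_le_compat_l; lra).
  assert (0 <= rho * z2 * (w1 * (row_norm v2 + 1) + w2 * (row_norm v1 + 1)))
    by (apply Rmult_le_pos; [lra | apply Rplus_le_le_0_compat; apply Rmult_le_pos; lra]).
  nra.
Qed.

(* For a cooperative linearization ([j12, j21 > 0]) with negative diagonal and
   positive determinant, the weights [(j21, j12)] make the quadratic form of
   the linear part symmetric, and hence negative definite. *)
Lemma cooperative_lyapunov j11 j12 j21 j22 v1 v2 :
  j11 < 0 -> j22 < 0 -> 0 < j12 -> 0 < j21 -> 0 < j11 * j22 - j12 * j21 ->
  exists c rho, 0 < c /\ 0 < rho /\ forall x y, x ^ 2 + y ^ 2 < rho ^ 2 ->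
    2 * j21 * x * (j11 * x + j12 * y + row_eval v1 0 x y)
    + 2 * j12 * y * (j21 * x + j22 * y + row_eval v2 0 x y) <= - c * (x ^ 2 + y ^ 2).
Proof.
  intros h11 h22 h12 h21 hdet.
  set (al := - j21 * j11); set (be := j12 * j21); set (gm := - j12 * j22).
  assert (hal : 0 < al) by (unfold al; nra); assert (hgm : 0 < gm) by (unfold gm; nra).
  assert (hdisc : 0 < al * gm - be ^ 2).
  { replace (al * gm - be ^ 2) with (j12 * j21 * (j11 * j22 - j12 * j21))
      by (unfold al, be, gm; ring).
    apply Rmult_lt_0_compat; nra. }
  set (c0 := (al * gm - be ^ 2) / (al + gm)).
  assert (hc0 : 0 < c0) by (unfold c0; apply Rdiv_lt_0_compat; lra).
  set (N := 2 * (j21 + j12) * (row_norm v1 + row_norm v2 + 1)).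
  pose proof (row_norm_ge0 v1); pose proof (row_norm_ge0 v2).
  assert (hN : 0 < N) by (unfold N; apply Rmult_lt_0_compat; lra).
  set (rho := Rmin 1 (c0 / N)).
  assert (hrho : 0 < rho) by (unfold rho; apply Rmin_pos; [lra | apply Rdiv_lt_0_compat; lra]).
  assert (hrho1 : rho <= 1) by apply Rmin_l.
  assert (hrhoN : rho * N <= c0).
  { assert (hmin : rho <= c0 / N) by apply Rmin_r.
    apply (Rmult_le_compat_r N) in hmin; [|lra].
    replace (c0 / N * N) with c0 in hmin by (field; lra); lra. }
  exists c0, rho; split; [lra|]; split; [lra|]; intros x y hxy.
  assert (hx : Rabs x < rho) by (apply abs_lt_of_sqr_lt; [lra | pose proof (pow2_ge_0 y); lra]).
  assert (hy : Rabs y < rho) by (apply abs_lt_of_sqr_lt; [lra | pose proof (pow2_ge_0 x); lra]).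
  pose proof (weighted_row_remainder_le j21 j12 v1 v2 rho x y ltac:(lra) ltac:(lra) hrho1 hx hy)
    as hrem; fold N in hrem.
  pose proof (quad_form_lower_bound al be gm x y hal hgm hdisc) as q; fold c0 in q.
  replace (2 * j21 * x * (j11 * x + j12 * y + row_eval v1 0 x y)
           + 2 * j12 * y * (j21 * x + j22 * y + row_eval v2 0 x y))
    with (-2 * (al * x ^ 2 - 2 * be * x * y + gm * y ^ 2)
          + (2 * j21 * (x * row_eval v1 0 x y) + 2 * j12 * (y * row_eval v2 0 x y)))
    by (unfold al, be, gm; ring).
  assert (rho * N * (x ^ 2 + y ^ 2) <= c0 * (x ^ 2 + y ^ 2))
    by (apply Rmult_le_compat_r; [pose proof (pow2_ge_0 x); pose proof (pow2_ge_0 y) |]; lra).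
  lra.
Qed.

(** * The energy balance model *)

Lemma coalbedo_locally_constant Tm Tp bm bp Ts0 : 0 < Tm < Tp -> 0 < bm < bp ->
  Tp < Ts0 \/ Ts0 < Tm ->
  exists be mg, 0 < be /\ 0 < mg /\
    forall s, Rabs (s - Ts0) < mg -> coalbedo Tm Tp bm bp s = be.
Proof.
  intros hT hb [warm|cold].
  - exists bp, (Ts0 - Tp); split; [lra|]; split; [lra|].
    intros s hs; apply Rabs_def2 in hs; unfold coalbedo.
    destruct (Rle_dec s Tm); [lra|]; destruct (Rle_dec Tp s); [reflexivity | lra].
  - exists bm, (Tm - Ts0); split; [lra|]; split; [lra|].
    intros s hs; apply Rabs_def2 in hs; unfold coalbedo.
    destruct (Rle_dec s Tm); [reflexivity | lra].
Qed.

Lemma rhs_a_eq_Fa sg e l a s : 0 <= a -> 0 <= s -> rhs_a sg e l a s = Fa e sg l a s.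
Proof. intros ha hs; unfold rhs_a, Fa; rewrite !Rabs_pos_eq by auto; ring. Qed.

Lemma rhs_s_eq_Fs sg q Tm Tp bm bp e l a s be : 0 <= a -> 0 <= s ->
  coalbedo Tm Tp bm bp s = be -> rhs_s sg q Tm Tp bm bp e l a s = Fs e sg (q * be) l a s.
Proof. intros ha hs hc; unfold rhs_s, Fs; rewrite hc, !Rabs_pos_eq by auto; ring. Qed.

Lemma is_equilibrium_iff_pos sg q Tm Tp bm bp e l a s be :
  0 < e < 2 -> 0 < sg -> 0 < q * be -> 0 <= l -> coalbedo Tm Tp bm bp s = be ->
  is_equilibrium sg q Tm Tp bm bp e l a s <-> pos_equilibrium e sg (q * be) l a s.
Proof.
  intros he hsg hQ hl hc; split.
  - intros [ha [hs [ea es]]].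
    rewrite rhs_a_eq_Fa in ea by auto; rewrite (rhs_s_eq_Fs _ _ _ _ _ _ _ _ _ _ be) in es by auto.
    apply pos_equilibrium_of_nonneg; auto; lra.
  - intros [ha [hs [ea es]]]; repeat split; try lra.
    + rewrite rhs_a_eq_Fa; auto; lra.
    + rewrite (rhs_s_eq_Fs _ _ _ _ _ _ _ _ _ _ be); auto; lra.
Qed.

Lemma exp_stable_at_pos_equilibrium ga gs sg q Tm Tp bm bp e l a s be mg :
  0 < ga -> 0 < gs -> 0 < e < 2 -> 0 < sg -> 0 <= l -> 0 < mg ->
  pos_equilibrium e sg (q * be) l a s ->
  (forall s', Rabs (s' - s) < mg -> coalbedo Tm Tp bm bp s' = be) ->
  exp_stable ga gs sg q Tm Tp bm bp e l a s.
Proof.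
  intros hga hgs he hsg hl hmg heq hconst.
  pose proof heq as [ha [hs [ea es]]].
  set (j11 := dFa_da e sg l a); set (j12 := dFa_ds e sg l s).
  set (j21 := dFs_da e sg l a); set (j22 := dFs_ds sg l s).
  assert (0 < e * sg * a ^ 3 /\ 0 < e * sg * s ^ 3 /\ 0 < sg * s ^ 3) as [p1 [p2 p3]]
    by (repeat split; repeat apply Rmult_lt_0_compat; try apply pow_lt; lra).
  destruct (cooperative_lyapunov j11 j12 j21 j22 (Fa_row e sg a s) (Fs_row e sg a s))
    as [c [rho1 [hc [hrho1 hly]]]];
    [unfold j11, dFa_da; lra | unfold j22, dFs_ds; lra | unfold j12, dFa_ds; lra
    | unfold j21, dFs_da; lra | apply (pos_equilibrium_det_pos e sg (q * be)); auto |].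
  destruct (exists_pos_le3 a s mg) as [rho0 [hrho0 [r2 [r3 r4]]]]; auto.
  set (rho := Rmin rho1 rho0).
  assert (hrho : 0 < rho) by (unfold rho; apply Rmin_pos; lra).
  assert (r1 : rho <= rho1) by apply Rmin_l.
  assert (r0 : rho <= rho0) by apply Rmin_r.
  set (F1 := fun x y => rhs_a sg e l (a + x) (s + y)).
  set (F2 := fun x y => rhs_s sg q Tm Tp bm bp e l (a + x) (s + y)).
  destruct (planar_exp_stability ga gs j21 j12 c rho a s F1 F2)
    as [delta [C [mu [hd [hC [hmu H]]]]]];
    auto; [unfold j21, dFs_da; lra | unfold j12, dFa_ds; lra| |].
  - intros x y hxy.
    assert (hx : Rabs x < rho) by (apply abs_lt_of_sqr_lt; [lra | pose proof (pow2_ge_0 y); lra]).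
    assert (hy : Rabs y < rho) by (apply abs_lt_of_sqr_lt; [lra | pose proof (pow2_ge_0 x); lra]).
    apply Rabs_def2 in hx; apply Rabs_def2 in hy.
    unfold F1, F2; rewrite rhs_a_eq_Fa, (rhs_s_eq_Fs _ _ _ _ _ _ _ _ _ _ be) by
      (try apply hconst; try (replace (s + y - s) with y by ring; apply Rabs_def1); lra).
    assert (ta := Fa_taylor e sg l a s 0 x y); assert (ts := Fs_taylor e sg (q * be) l a s 0 x y).
    rewrite Rplus_0_r, ea, Rplus_0_l in ta; rewrite Rplus_0_r, es, Rplus_0_l in ts; rewrite ta, ts.
    apply hly; assert (rho ^ 2 <= rho1 ^ 2) by (apply pow_incr; lra); lra.
  - exists delta, C, mu; repeat split; auto.
    intros Tend xa xs _ [hra [hrs hder]] hd0 t ht.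
    apply (H Tend xa xs hra hrs); auto.
    intros t' ht'; unfold F1, F2.
    replace (a + (xa t' - a)) with (xa t') by ring; replace (s + (xs t' - s)) with (xs t') by ring.
    apply hder; auto.
Qed.

Theorem proposition2p6
  (ga gs sigB q Tm Tp bm bp eps : R)
  (hga : 0 < ga) (hgs : 0 < gs) (hsig : 0 < sigB) (hq : 0 < q)
  (hT : 0 < Tm < Tp) (hb : 0 < bm < bp) (heps : 0 < eps < 2)
  (lam0 Ta0 Ts0 : R) (hlam0 : 0 <= lam0)
  (heq : is_equilibrium sigB q Tm Tp bm bp eps lam0 Ta0 Ts0)
  (hwc : Tp < Ts0 \/ Ts0 < Tm) :
  exists (dl dx : R) (Ta_eq Ts_eq : R -> R),
    0 < dl /\ 0 < dx /\
    Ta_eq lam0 = Ta0 /\ Ts_eq lam0 = Ts0 /\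
    (forall lam, 0 <= lam -> Rabs (lam - lam0) < dl ->
       is_equilibrium sigB q Tm Tp bm bp eps lam (Ta_eq lam) (Ts_eq lam) /\
       dist2 (Ta_eq lam) (Ts_eq lam) Ta0 Ts0 < dx /\
       (forall Ta Ts, is_equilibrium sigB q Tm Tp bm bp eps lam Ta Ts ->
          dist2 Ta Ts Ta0 Ts0 < dx -> Ta = Ta_eq lam /\ Ts = Ts_eq lam) /\
       exp_stable ga gs sigB q Tm Tp bm bp eps lam (Ta_eq lam) (Ts_eq lam)) /\
    analytic_on (fun lam => 0 <= lam /\ Rabs (lam - lam0) < dl) Ts_eq /\
    analytic_on (fun lam => 0 <= lam /\ Rabs (lam - lam0) < dl) Ta_eq /\
    strictly_decreasing_on (fun lam => 0 <= lam /\ Rabs (lam - lam0) < dl) Ts_eq /\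
    (eps < 1 ->
       strictly_increasing_on (fun lam => 0 <= lam /\ Rabs (lam - lam0) < dl) Ta_eq) /\
    (1 < eps ->
       strictly_decreasing_on (fun lam => 0 <= lam /\ Rabs (lam - lam0) < dl) Ta_eq).
Proof.
  destruct (coalbedo_locally_constant Tm Tp bm bp Ts0 hT hb hwc) as [be [mg [hbe [hmg hconst]]]].
  assert (hQ : 0 < q * be) by nra.
  assert (hiff : forall lam Ta Ts, 0 <= lam -> Rabs (Ts - Ts0) < mg ->
    is_equilibrium sigB q Tm Tp bm bp eps lam Ta Ts <-> pos_equilibrium eps sigB (q * be) lam Ta Ts)
    by (intros; apply is_equilibrium_iff_pos; auto).
  assert (heq0 : pos_equilibrium eps sigB (q * be) lam0 Ta0 Ts0)
    by (apply hiff; auto; rewrite Rminus_diag, Rabs_R0; lra).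
  pose proof heq0 as [hTa0 [hTs0 _]].
  destruct (exists_pos_le3 (Ta0 / 4) (Ts0 / 4) (mg / 4)) as [e0 [he0 [h1 [h2 h3]]]]; try lra.
  destruct (pos_equilibrium_branch eps sigB (q * be) heps hsig lam0 Ta0 Ts0 e0)
    as [dl [Ta_eq [Ts_eq [hdl [hTa [hTs hbranch]]]]]]; auto; try lra.
  set (D := fun lam => 0 <= lam /\ Rabs (lam - lam0) < dl).
  assert (hfam : forall lam, D lam ->
    0 <= lam /\ pos_equilibrium eps sigB (q * be) lam (Ta_eq lam) (Ts_eq lam))
    by (intros lam [hl hlr]; split; [exact hl | apply hbranch; auto]).
  destruct (analytic_on_pos_equilibria _ _ _ heps hsig hQ D Ta_eq Ts_eq hfam) as [anTa anTs].
  destruct (pos_equilibria_monotone _ _ _ heps hsig hQ D Ta_eq Ts_eq hfam) as [mTs [mTa1 mTa2]].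
  exists dl, (2 * e0), Ta_eq, Ts_eq; split; [exact hdl|]; split; [lra|].
  refine (conj hTa (conj hTs (conj _ (conj anTs (conj anTa (conj mTs (conj mTa1 mTa2))))))).
  intros lam hl hlr; destruct (hbranch lam hl hlr) as [heql [dTa dTs]].
  split; [apply hiff; auto; lra|]; split; [apply dist2_lt_of_abs_lt; auto|]; split.
  - intros Ta Ts heqT hd; apply abs_lt_of_dist2_lt in hd.
    apply (pos_equilibrium_unique eps sigB (q * be) heps hsig hQ lam); auto.
    apply (hiff lam); auto; lra.
  - apply (exp_stable_at_pos_equilibrium _ _ _ _ _ _ _ _ _ _ _ _ be (mg / 2)); auto; try lra.
    intros s hs; apply hconst; apply Rabs_def2 in hs; apply Rabs_def2 in dTs; apply Rabs_def1; lra.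
Qed.
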